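(* Let $f:\mathbb{R}^{3}\to\mathbb{R}$ be quasi normal or quasi split normal. Then for all $x,y,z\in\mathbb{R}$ and $k_{1},k_{2},k_{3}\neq0$: (a) the limits $A(k_{1},y,z)=\lim_{r\to\infty}\int_{-r}^{r}f(x,y,z)e^{-ik_{1}x}dx$, $B(x,k_{2},z)=\lim_{r\to\infty}\int_{-r}^{r}f(x,y,z)e^{-ik_{2}y}dy$, $C(x,y,k_{3})=\lim_{r\to\infty}\int_{-r}^{r}f(x,y,z)e^{-ik_{3}z}dz$ all exist, and $(y,z)\mapsto A(k_{1},y,z)$, $(x,z)\mapsto B(x,k_{2},z)$, $(x,y)\mapsto C(x,y,k_{3})$ are of moderate decrease $3$; (b) the limits $F(k_{1},k_{2},z)=\lim_{r,s\to\infty}\int_{-r}^{r}\int_{-s}^{s}f(x,y,z)e^{-ik_{1}x}e^{-ik_{2}y}dxdy$, $G(k_{1},y,k_{3})=\lim_{r,s\to\infty}\int_{-r}^{r}\int_{-s}^{s}f(x,y,z)e^{-ik_{1}x}e^{-ik_{3}z}dxdz$, $H(x,k_{2},k_{3})=\lim_{r,s\to\infty}\int_{-r}^{r}\int_{-s}^{s}f(x,y,z)e^{-ik_{2}y}e^{-ik_{3}z}dydz$ all exist and are of moderate decrease in their remaining variable; (c) $F(k_{1},k_{2},z)=\int_{-\infty}^{\infty}A(k_{1},y,z)e^{-ik_{2}y}dy=\int_{-\infty}^{\infty}B(x,k_{2},z)e^{-ik_{1}x}dx$, $G(k_{1},y,k_{3})=\int_{-\infty}^{\infty}A(k_{1},y,z)e^{-ik_{3}z}dz=\int_{-\infty}^{\infty}C(x,y,k_{3})e^{-ik_{1}x}dx$,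 $H(x,k_{2},k_{3})=\int_{-\infty}^{\infty}B(x,k_{2},z)e^{-ik_{3}z}dz=\int_{-\infty}^{\infty}C(x,y,k_{3})e^{-ik_{2}y}dy$.
   Context: One-variable: a smooth $g:\mathbb{R}\setminus V\to\mathbb{R}$, $V$ bounded closed, is analytic at infinity if there exist $\epsilon_{1},\epsilon_{2}>0$ with $g(1/t)=\sum_{n\geq1}a_{n}t^{n}$ on $(0,\epsilon_{1})$ and $g(1/t)=\sum_{n\geq1}b_{n}t^{n}$ on $(-\epsilon_{2},0)$, real coefficients, both series absolutely convergent there. A one-variable function is of moderate decrease if $|g(t)|\leq C/t^{2}$ for $|t|>1$. Two variables: for smooth $h:\mathbb{R}^{2}\setminus W\to\mathbb{R}$, $W$ closed bounded: very moderate decrease means $|h(u,v)|\leq C/|(u,v)|$ for $|(u,v)|>1$; moderate decrease $n$ means $|h|\leq C/|(u,v)|^{n}$ for $|(u,v)|>1$ (moderate decrease means $n=2$). With fibres $h_{u}(v)=h(u,v)$, $h_{v}(u)=h(u,v)$: conditions (i) every $h_{u}$ analytic at infinity; (ii) every $h_{v}$ analytic at infinity; (iii) $h$ of very moderate decrease; (iv) $\partial h/\partial u$, $\partial h/\partial v$ of moderate decrease. $h$ is quasi normal if (i)–(iv) and (v)': for sufficiently large $u$ the zeros of $h_{u}$ lie in $(-M_{u},-N_{u})\cup(N_{u},M_{u})$ with $M_{u}-N_{u}$ uniformly bounded, likewise for $(h_{u})',(h_{u})''$ and for $h_{v},(h_{v})',(h_{v})''$. $h$ is quasi split normal if (i)–(iv)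 and (v)'': for sufficiently large $(u,v)$, $h=h_{1}+h_{2}$ with $h_{1},h_{2}$ quasi normal and $h,h_{1},h_{2}$ smooth. Three variables: smooth $f:\mathbb{R}^{3}\to\mathbb{R}$ is of very moderate decrease if $|f(x,y,z)|\leq C/|(x,y,z)|$ for $|(x,y,z)|>1$, of moderate decrease $n$ ($n\geq2$) if $|f|\leq C/|(x,y,z)|^{n}$ there. Fibres: $f_{x}(y,z)=f(x,y,z)$ etc., and $f_{x,y}(z)=f(x,y,z)$, $f_{x,z}(y)$, $f_{y,z}(x)$ similarly. Conditions: (iv) $f$ is of very moderate decrease; (v) for $i+j+k\geq1$, $\frac{\partial^{i+j+k}f}{\partial x^{i}\partial y^{j}\partial z^{k}}$ is of moderate decrease $i+j+k+1$. $f$ is quasi normal if all two-variable fibres $f_{x}(y,z)$, $f_{y}(x,z)$, $f_{z}(x,y)$ are quasi normal, (iv),(v) hold, and (vi)': for sufficiently large $(x,y)$, the zeros of $f_{x,y}$ and of its first four derivatives are contained in a finite union of $S$ intervals of total length $R$, with $S,R$ uniform in $(x,y)$, and similarly for $f_{x,z},f_{y,z}$. $f$ is quasi split normal if all two-variable fibres are quasi split normal, (iv),(v) hold, and (vi)'': for sufficiently large $(x,y)$, $f=f_{1}+f_{2}$ with $f,f_{1},f_{2}$ smooth and $f_{1},f_{2}$ having property (vi)'. *)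

From Stdlib Require Import Reals Lra List.
From Coquelicot Require Import Coquelicot.
Open Scope R_scope.

Definition norm2 (u v : R) : R := sqrt (u ^ 2 + v ^ 2).
Definition norm3 (x y z : R) : R := sqrt (x ^ 2 + y ^ 2 + z ^ 2).

Definition expi (t : R) : C := (cos t, sin t).

(** g : R \ V -> R (V bounded closed) analytic at infinity.  g is represented
    as a total function; only its values off V matter. *)
Definition analytic_at_infinity (V : R -> Prop) (g : R -> R) : Prop :=
  exists (e1 e2 : R) (a b : nat -> R), 0 < e1 /\ 0 < e2 /\
  (forall t, 0 < t < e1 ->
     ~ V (1 / t) /\
     ex_series (fun n => Rabs (a (S n) * t ^ (S n))) /\
     is_series (fun n => a (S n) * t ^ (S n)) (g (1 / t))) /\
  (forall t, - e2 < t < 0 ->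
     ~ V (1 / t) /\
     ex_series (fun n => Rabs (b (S n) * t ^ (S n))) /\
     is_series (fun n => b (S n) * t ^ (S n)) (g (1 / t))).

Definition moderate_decrease1 (g : R -> C) : Prop :=
  exists Cst : R, forall t, 1 < Rabs t -> Cmod (g t) <= Cst / t ^ 2.

Definition closed_bounded2 (W : R -> R -> Prop) : Prop :=
  closed (fun p : R * R => W (fst p) (snd p)) /\
  exists M, forall u v, W u v -> norm2 u v <= M.

Inductive dir2 := Du | Dv.

Definition pd2 (d : dir2) (h : R -> R -> R) : R -> R -> R :=
  match d with
  | Du => fun u v => Derive (fun t => h t v) u
  | Dv => fun u v => Derive (fun t => h u t) v
  end.

Definition iter_pd2 (l : list dir2) (h : R -> R -> R) : R -> R -> R :=
  fold_right pd2 h l.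

Definition smooth2 (W : R -> R -> Prop) (h : R -> R -> R) : Prop :=
  forall (l : list dir2) (u v : R), ~ W u v ->
    continuous (fun p : R * R => iter_pd2 l h (fst p) (snd p)) (u, v) /\
    ex_derive (fun t => iter_pd2 l h t v) u /\
    ex_derive (fun t => iter_pd2 l h u t) v.

Definition very_moderate_decrease2 (W : R -> R -> Prop) (h : R -> R -> R) : Prop :=
  exists Cst : R, forall u v, ~ W u v -> 1 < norm2 u v ->
    Rabs (h u v) <= Cst / norm2 u v.

Definition moderate_decrease2_n (n : nat) (W : R -> R -> Prop) (h : R -> R -> R)
  : Prop :=
  exists Cst : R, forall u v, ~ W u v -> 1 < norm2 u v ->
    Rabs (h u v) <= Cst / norm2 u v ^ n.

Definition zeros_in_sym_intervals (V : R -> Prop) (g : R -> R) (N M : R) : Prop :=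
  forall t, ~ V t -> g t = 0 -> (- M < t < - N \/ N < t < M).

Definition cond_v' (W : R -> R -> Prop) (h : R -> R -> R) : Prop :=
  exists U K : R,
    (forall u, U < Rabs u ->
       forall m : nat, (m <= 2)%nat ->
       exists N M, M - N <= K /\
         zeros_in_sym_intervals (fun v => W u v)
           (fun v => Derive_n (fun t => h u t) m v) N M) /\
    (forall v, U < Rabs v ->
       forall m : nat, (m <= 2)%nat ->
       exists N M, M - N <= K /\
         zeros_in_sym_intervals (fun u => W u v)
           (fun u => Derive_n (fun t => h t v) m u) N M).

Definition cond_i_iv (W : R -> R -> Prop) (h : R -> R -> R) : Prop :=
  (forall u, analytic_at_infinity (fun v => W u v) (fun v => h u v)) /\
  (forall v, analytic_at_infinity (fun u => W u v) (fun u => h u v)) /\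
  very_moderate_decrease2 W h /\
  moderate_decrease2_n 2 W (pd2 Du h) /\
  moderate_decrease2_n 2 W (pd2 Dv h).

Definition quasi_normal2 (W : R -> R -> Prop) (h : R -> R -> R) : Prop :=
  closed_bounded2 W /\ smooth2 W h /\ cond_i_iv W h /\ cond_v' W h.

Definition quasi_split_normal2 (W : R -> R -> Prop) (h : R -> R -> R) : Prop :=
  closed_bounded2 W /\ smooth2 W h /\ cond_i_iv W h /\
  exists (W1 W2 : R -> R -> Prop) (h1 h2 : R -> R -> R) (R0 : R),
    quasi_normal2 W1 h1 /\ quasi_normal2 W2 h2 /\
    forall u v, R0 < norm2 u v -> ~ W u v /\ ~ W1 u v /\ ~ W2 u v /\
      h u v = h1 u v + h2 u v.

Inductive dir3 := Dx | Dy | Dz.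

Definition pd3 (d : dir3) (f : R -> R -> R -> R) : R -> R -> R -> R :=
  match d with
  | Dx => fun x y z => Derive (fun t => f t y z) x
  | Dy => fun x y z => Derive (fun t => f x t z) y
  | Dz => fun x y z => Derive (fun t => f x y t) z
  end.

Definition iter_pd3 (l : list dir3) (f : R -> R -> R -> R) : R -> R -> R -> R :=
  fold_right pd3 f l.

Definition smooth3 (f : R -> R -> R -> R) : Prop :=
  forall (l : list dir3) (x y z : R),
    continuous (fun p : R * R * R => iter_pd3 l f (fst (fst p)) (snd (fst p)) (snd p))
      (x, y, z) /\
    ex_derive (fun t => iter_pd3 l f t y z) x /\
    ex_derive (fun t => iter_pd3 l f x t z) y /\
    ex_derive (fun t => iter_pd3 l f x y t) z.

Definition D3 (i j k : nat) (f : R -> R -> R -> R) : R -> R -> R -> R :=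
  Nat.iter i (pd3 Dx) (Nat.iter j (pd3 Dy) (Nat.iter k (pd3 Dz) f)).

Definition very_moderate_decrease3 (f : R -> R -> R -> R) : Prop :=
  exists Cst : R, forall x y z, 1 < norm3 x y z ->
    Rabs (f x y z) <= Cst / norm3 x y z.

Definition moderate_decrease3_n (n : nat) (f : R -> R -> R -> R) : Prop :=
  exists Cst : R, forall x y z, 1 < norm3 x y z ->
    Rabs (f x y z) <= Cst / norm3 x y z ^ n.

Definition cond_v3 (f : R -> R -> R -> R) : Prop :=
  forall i j k : nat, (1 <= i + j + k)%nat ->
    moderate_decrease3_n (i + j + k + 1) (D3 i j k f).

Definition zeros_covered (g : R -> R) (I : list (R * R)) : Prop :=
  forall (m : nat) (t : R), (m <= 4)%nat -> Derive_n g m t = 0 ->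
    exists ab, In ab I /\ fst ab <= t <= snd ab.

Fixpoint total_length (I : list (R * R)) : R :=
  match I with
  | nil => 0
  | ab :: I' => (snd ab - fst ab) + total_length I'
  end.

Definition zeros_in_S_intervals (g : R -> R) (S : nat) (Rt : R) : Prop :=
  exists I : list (R * R),
    (length I <= S)%nat /\ (forall ab, In ab I -> fst ab <= snd ab) /\
    total_length I <= Rt /\ zeros_covered g I.

Definition cond_vi' (f : R -> R -> R -> R) : Prop :=
  exists (R0 : R) (S : nat) (Rt : R),
    (forall x y, R0 < norm2 x y -> zeros_in_S_intervals (fun z => f x y z) S Rt) /\
    (forall x z, R0 < norm2 x z -> zeros_in_S_intervals (fun y => f x y z) S Rt) /\
    (forall y z, R0 < norm2 y z -> zeros_in_S_intervals (fun x => f x y z) S Rt).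

Definition noW : R -> R -> Prop := fun _ _ => False.

Definition quasi_normal3 (f : R -> R -> R -> R) : Prop :=
  smooth3 f /\
  (forall x, quasi_normal2 noW (fun y z => f x y z)) /\
  (forall y, quasi_normal2 noW (fun x z => f x y z)) /\
  (forall z, quasi_normal2 noW (fun x y => f x y z)) /\
  very_moderate_decrease3 f /\ cond_v3 f /\ cond_vi' f.

Definition split_vi' (f f1 f2 : R -> R -> R -> R) : Prop :=
  smooth3 f1 /\ smooth3 f2 /\ cond_vi' f1 /\ cond_vi' f2.

Definition cond_vi'' (f : R -> R -> R -> R) : Prop :=
  (exists f1 f2 R0, split_vi' f f1 f2 /\
     forall x y z, R0 < norm2 x y -> f x y z = f1 x y z + f2 x y z) /\
  (exists f1 f2 R0, split_vi' f f1 f2 /\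
     forall x y z, R0 < norm2 x z -> f x y z = f1 x y z + f2 x y z) /\
  (exists f1 f2 R0, split_vi' f f1 f2 /\
     forall x y z, R0 < norm2 y z -> f x y z = f1 x y z + f2 x y z).

Definition quasi_split_normal3 (f : R -> R -> R -> R) : Prop :=
  smooth3 f /\
  (forall x, quasi_split_normal2 noW (fun y z => f x y z)) /\
  (forall y, quasi_split_normal2 noW (fun x z => f x y z)) /\
  (forall z, quasi_split_normal2 noW (fun x y => f x y z)) /\
  very_moderate_decrease3 f /\ cond_v3 f /\ cond_vi'' f.

Definition ft_lim1 (g : R -> R) (k : R) (L : C) : Prop :=
  filterlim (fun r => RInt (V := C_R_CompleteNormedModule)
                        (fun t => Cmult (RtoC (g t)) (expi (- (k * t)))) (- r) r)
    (Rbar_locally p_infty) (locally L).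

Definition ft_lim2 (g : R -> R -> R) (k l : R) (L : C) : Prop :=
  filterlim (fun rs : R * R =>
      RInt (V := C_R_CompleteNormedModule)
        (fun b => RInt (V := C_R_CompleteNormedModule)
           (fun a => Cmult (Cmult (RtoC (g a b)) (expi (- (k * a)))) (expi (- (l * b))))
           (- snd rs) (snd rs))
        (- fst rs) (fst rs))
    (filter_prod (Rbar_locally p_infty) (Rbar_locally p_infty)) (locally L).

Definition ft_int (g : R -> C) (k : R) (L : C) : Prop :=
  is_RInt_gen (V := C_R_NormedModule) (fun t => Cmult (g t) (expi (- (k * t))))
    (Rbar_locally m_infty) (Rbar_locally p_infty) L.

Definition moderate_decrease2C (n : nat) (h : R -> R -> C) : Prop :=
  exists Cst : R, forall u v, 1 < norm2 u v -> Cmod (h u v) <= Cst / norm2 u v ^ n.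

From Pilot Require Import Defs.
From Stdlib Require Import Reals Lra Lia List FunctionalExtensionality IndefiniteDescription.
From Coquelicot Require Import Coquelicot.
Open Scope R_scope.

(* Fix one coordinate, say z = c, and write g(a, b) = f(a, b, c).  Three integrations by parts
   in a turn the truncated transform of g(., b) at frequency k into boundary terms of size O(1/r)
   plus k^-2 times an integral of the third a-derivative of g against a bounded factor; by (v)
   that derivative is O(|(a, b, c)|^-4), so the integral converges absolutely, which gives A(b)
   together with the bound O(|(b, c)|^-3).  The same bounds show that the truncated transforms
   converge to A uniformly in b at rate O(1/s) (one more integration by parts, in b, handles the
   boundary terms), so the double limit F exists, equals the improper integral of A(b) e^{-ilb},
   and is O(c^-2).  Fubini on rectangles identifies the double limits taken in the two orders,
   which gives the second formula of (c).  Only smoothness and the decay conditions (iv) and (v)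
   are used. *)

(** * Complex-valued integrals *)

Local Notation CV := C_R_CompleteNormedModule.
Local Notation Cnorm := (@norm R_AbsRing CV).

Ltac C_unfold :=
  unfold minus, plus, opp, scal, zero; simpl;
  unfold prod_plus, prod_opp, prod_scal, prod_zero; simpl;
  unfold plus, opp, scal, mult, zero; simpl;
  unfold Cplus, Copp, Cminus, Cmult, RtoC; simpl; unfold mult; simpl.

Lemma Cnorm_pair (a b : R) : Cnorm (a, b) = sqrt (a ^ 2 + b ^ 2).
Proof.
  unfold norm; simpl; unfold prod_norm; simpl; unfold norm; simpl; unfold abs; simpl.
  f_equal; rewrite !Rmult_1_r, <- !Rabs_mult.
  rewrite (Rabs_right (a * a)), (Rabs_right (b * b)) by nra; reflexivity.
Qed.

Lemma Cnorm_Cmod (z : C) : Cnorm z = Cmod z.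
Proof. destruct z; apply Cnorm_pair. Qed.

Lemma Cnorm_le_components (z : C) (K : R) :
  Rabs (fst z) <= K -> Rabs (snd z) <= K -> Cnorm z <= sqrt 2 * K.
Proof.
  destruct z as [a b]; simpl; intros Ha Hb; rewrite Cnorm_pair.
  assert (HK : 0 <= K) by (eapply Rle_trans; [apply Rabs_pos | exact Ha]).
  replace (sqrt 2 * K) with (sqrt (2 * K ^ 2))
    by (rewrite sqrt_mult, sqrt_pow2 by nra; reflexivity).
  apply sqrt_le_1_alt.
  assert (a ^ 2 <= K ^ 2) by (rewrite <- (pow2_abs a); apply pow_incr; split; [apply Rabs_pos | exact Ha]).
  assert (b ^ 2 <= K ^ 2) by (rewrite <- (pow2_abs b); apply pow_incr; split; [apply Rabs_pos | exact Hb]).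
  lra.
Qed.

Lemma Cnorm_Cmult (z w : C) : Cnorm (Cmult z w) = Cnorm z * Cnorm w.
Proof. rewrite !Cnorm_Cmod; apply Cmod_mult. Qed.

Lemma Cnorm_Cmult_expi (z : C) (t : R) : Cnorm (Cmult z (expi t)) = Cnorm z.
Proof.
  unfold expi; rewrite Cnorm_Cmult, (Cnorm_pair (cos t) (sin t)).
  replace (cos t ^ 2 + sin t ^ 2) with 1 by (pose proof (sin2_cos2 t); unfold Rsqr in *; lra).
  rewrite sqrt_1; ring.
Qed.

Lemma Cnorm_scal_le (l : R) (x : C) : Cnorm (@scal _ CV l x) <= Rabs l * Cnorm x.
Proof. apply (norm_scal (K := R_AbsRing) (V := CV)). Qed.

Lemma Cnorm_minus_le (x y : C) : Cnorm (@minus CV x y) <= Cnorm x + Cnorm y.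
Proof.
  eapply Rle_trans; [apply (norm_triangle (K := R_AbsRing) (V := CV)) |].
  rewrite (norm_opp (K := R_AbsRing) (V := CV)); lra.
Qed.

Lemma Cnorm_minus_sym (x y : C) : Cnorm (@minus CV x y) = Cnorm (@minus CV y x).
Proof.
  rewrite <- (norm_opp (K := R_AbsRing) (V := CV)); f_equal.
  destruct x, y; C_unfold; f_equal; ring.
Qed.

Lemma Cnorm_minus_triangle (x y z : C) :
  Cnorm (@minus CV x z) <= Cnorm (@minus CV x y) + Cnorm (@minus CV y z).
Proof.
  replace (@minus CV x z) with (@plus CV (@minus CV x y) (@minus CV y z))
    by (destruct x, y, z; C_unfold; f_equal; ring).
  apply (norm_triangle (K := R_AbsRing) (V := CV)).
Qed.

Lemma is_derive_C_pair (p q : R -> R) (t dp dq : R) :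
  is_derive p t dp -> is_derive q t dq ->
  is_derive (V := C_R_NormedModule) (fun s => ((p s, q s) : C)) t ((dp, dq) : C).
Proof.
  intros Hp Hq; unfold is_derive.
  apply (filterdiff_comp_2 (K := R_AbsRing) (U := R_NormedModule) (V := R_NormedModule)
     (W := C_R_NormedModule) p q (fun u v => (u, v)) (fun y => scal y dp) (fun y => scal y dq)
     (fun u v => (u, v))); try assumption.
  apply filterdiff_linear.
  apply (is_linear_prod (K := R_AbsRing)
    (T := prod_NormedModule R_AbsRing R_NormedModule R_NormedModule)
    (U := R_NormedModule) (V := R_NormedModule) fst snd).
  - apply is_linear_fst.
  - apply is_linear_snd.
Qed.

Lemma continuous_pair {U V W : UniformSpace} (f : U -> V) (g : U -> W) (x : U) :
  continuous f x -> continuous g x -> continuous (fun t => (f t, g t)) x.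
Proof.
  intros Hf Hg.
  apply (continuous_comp_2 (V := V) (W := W) (X := prod_UniformSpace V W) f g (fun u v => (u, v)));
    auto.
  apply continuous_ext with (f := fun x : V * W => x); [intros []; reflexivity | apply continuous_id].
Qed.

Lemma continuous_C_pair {U : UniformSpace} (p q : U -> R) (t : U) :
  continuous p t -> continuous q t -> continuous (fun s => ((p s, q s) : C)) t.
Proof. apply (continuous_pair (V := R_UniformSpace) (W := R_UniformSpace)). Qed.

Lemma continuous_C_fst (h : R -> C) (t : R) : continuous h t -> continuous (fun s => fst (h s)) t.
Proof. intros H; apply (continuous_comp h fst); auto; destruct (h t); apply continuous_fst. Qed.

Lemma continuous_C_snd (h : R -> C) (t : R) : continuous h t -> continuous (fun s => snd (h s)) t.
Proof. intros H; apply (continuous_comp h snd); auto; destruct (h t); apply continuous_snd. Qed.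

Lemma continuous_mult_R {U : UniformSpace} (u v : U -> R) (t : U) :
  continuous u t -> continuous v t -> continuous (fun s => u s * v s) t.
Proof. apply (continuous_mult (K := R_AbsRing)). Qed.

Lemma continuous_Cmult (h g : R -> C) (t : R) :
  continuous h t -> continuous g t -> continuous (fun s => Cmult (h s) (g s)) t.
Proof.
  intros Hh Hg; eapply continuous_ext.
  2: { apply (continuous_C_pair (fun s => fst (h s) * fst (g s) - snd (h s) * snd (g s))
                                (fun s => fst (h s) * snd (g s) + snd (h s) * fst (g s))).
       - apply (continuous_minus (V := R_NormedModule));
           apply continuous_mult_R; auto using continuous_C_fst, continuous_C_snd.
       - apply (continuous_plus (V := R_NormedModule));
           apply continuous_mult_R; auto using continuous_C_fst, continuous_C_snd. }
  intros s; simpl; destruct (h s), (g s); reflexivity.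
Qed.

Lemma continuous_expi_linear (l t : R) : continuous (fun s => expi (- (l * s))) t.
Proof.
  unfold expi; apply continuous_C_pair;
    apply (ex_derive_continuous (K := R_AbsRing) (V := R_NormedModule)); auto_derive; auto.
Qed.

Lemma ex_RInt_C_continuous (h : R -> C) (a b : R) :
  (forall t, continuous h t) -> ex_RInt (V := CV) h a b.
Proof. intros H; apply (ex_RInt_continuous (V := CV)); intros; apply H. Qed.

Lemma is_RInt_C_pair (h : R -> C) (a b x y : R) :
  is_RInt (fun t => fst (h t)) a b x -> is_RInt (fun t => snd (h t)) a b y ->
  is_RInt (V := CV) h a b ((x, y) : C).
Proof. apply (is_RInt_fct_extend_pair (U := R_NormedModule) (V := R_NormedModule)). Qed.

Lemma RInt_C_pair (h : R -> C) (a b : R) :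
  ex_RInt (fun t => fst (h t)) a b -> ex_RInt (fun t => snd (h t)) a b ->
  RInt (V := CV) h a b = ((RInt (fun t => fst (h t)) a b, RInt (fun t => snd (h t)) a b) : C).
Proof.
  intros H1 H2; apply is_RInt_unique.
  apply is_RInt_C_pair; apply (RInt_correct (V := R_CompleteNormedModule)); auto.
Qed.

Lemma is_RInt_Cmult_r (h : R -> C) (a b : R) (L c : C) :
  is_RInt (V := CV) h a b L -> is_RInt (V := CV) (fun t => Cmult (h t) c) a b (Cmult L c).
Proof.
  intros H; destruct c as [c1 c2], L as [l1 l2].
  pose proof (is_RInt_fct_extend_fst (U := R_NormedModule) (V := R_NormedModule) _ _ _ _ H) as H1.
  pose proof (is_RInt_fct_extend_snd (U := R_NormedModule) (V := R_NormedModule) _ _ _ _ H) as H2.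
  simpl in H1, H2.
  replace (Cmult (l1, l2) (c1, c2)) with
    ((@minus R_NormedModule (scal c1 l1) (scal c2 l2),
      @plus R_NormedModule (scal c2 l1) (scal c1 l2)) : C)
    by (unfold Cmult; simpl; f_equal; C_unfold; ring).
  apply is_RInt_C_pair; eapply is_RInt_ext.
  2: { apply (is_RInt_minus (V := R_NormedModule));
       apply (is_RInt_scal (V := R_NormedModule)); eassumption. }
  { intros x _; unfold Cmult; simpl; C_unfold; ring. }
  2: { apply (is_RInt_plus (V := R_NormedModule));
       apply (is_RInt_scal (V := R_NormedModule)); eassumption. }
  intros x _; unfold Cmult; simpl; C_unfold; ring.
Qed.

Lemma RInt_Cmult_r (h : R -> C) (a b : R) (c : C) : ex_RInt (V := CV) h a b ->
  RInt (V := CV) (fun t => Cmult (h t) c) a b = Cmult (RInt (V := CV) h a b) c.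
Proof. intros H; apply is_RInt_unique, is_RInt_Cmult_r, RInt_correct, H. Qed.

Lemma RInt_Cmult_l (h : R -> C) (a b : R) (c : C) : ex_RInt (V := CV) h a b ->
  RInt (V := CV) (fun t => Cmult c (h t)) a b = Cmult c (RInt (V := CV) h a b).
Proof.
  intros H; rewrite Cmult_comm, <- RInt_Cmult_r by exact H.
  apply (RInt_ext (V := CV)); intros; apply Cmult_comm.
Qed.

(** * Improper integrals with inverse-square decay *)

Lemma is_RInt_inv_sqr (M a b : R) : (0 < a \/ b < 0) -> a <= b ->
  is_RInt (fun t => M / t ^ 2) a b (M / a - M / b).
Proof.
  intros Hab Hle.
  replace (M / a - M / b) with (minus (- M / b) (- M / a))
    by (C_unfold; field; split; intro; subst; lra).
  apply (is_RInt_derive (fun t => - M / t)); intros x Hx;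
    rewrite Rmin_left, Rmax_right in Hx by lra; assert (x <> 0) by lra.
  - auto_derive; auto; field; auto.
  - apply (ex_derive_continuous (K := R_AbsRing) (V := R_NormedModule) (fun t => M / t ^ 2)).
    auto_derive; auto.
Qed.

Lemma Cnorm_RInt_le (h : R -> C) (g : R -> R) (a b lg : R) :
  a <= b -> ex_RInt (V := CV) h a b -> (forall t, a <= t <= b -> Cnorm (h t) <= g t) ->
  is_RInt g a b lg -> Cnorm (RInt (V := CV) h a b) <= lg.
Proof. intros Hab Hex Hb Hg; apply (norm_RInt_le (V := CV) h g a b); auto; apply RInt_correct, Hex. Qed.

Section InverseSquareTails.

Variables (h : R -> C) (M T : R).
Hypothesis h_int : forall a b, ex_RInt (V := CV) h a b.
Hypothesis M_ge0 : 0 <= M.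
Hypothesis T_gt0 : 0 < T.
Hypothesis h_decay : forall t, T <= Rabs t -> Cnorm (h t) <= M / t ^ 2.

Lemma Cnorm_RInt_right_tail (b : R) : T <= b -> Cnorm (RInt (V := CV) h T b) <= M / T.
Proof.
  intros Hb; eapply Rle_trans.
  - apply (Cnorm_RInt_le h (fun t => M / t ^ 2) T b (M / T - M / b)); auto.
    + intros t Ht; apply h_decay; rewrite Rabs_right; lra.
    + apply is_RInt_inv_sqr; lra.
  - assert (0 <= M / b) by (apply Rdiv_le_0_compat; lra); lra.
Qed.

Lemma Cnorm_RInt_left_tail (a : R) : a <= - T -> Cnorm (RInt (V := CV) h a (- T)) <= M / T.
Proof.
  intros Ha; eapply Rle_trans.
  - apply (Cnorm_RInt_le h (fun t => M / t ^ 2) a (- T) (M / a - M / (- T))); auto.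
    + intros t Ht; apply h_decay; rewrite Rabs_left; lra.
    + apply is_RInt_inv_sqr; lra.
  - assert (M / a <= 0).
    { unfold Rdiv; assert (/ a < 0) by (apply Rinv_lt_0_compat; lra); nra. }
    replace (M / (- T)) with (- (M / T)) by (field; lra); lra.
Qed.

Lemma RInt_split_central (a b : R) : a <= - T -> T <= b ->
  RInt (V := CV) h a b = @plus CV (RInt (V := CV) h a (- T))
    (@plus CV (RInt (V := CV) h (- T) T) (RInt (V := CV) h T b)).
Proof.
  intros Ha Hb; rewrite (RInt_Chasles (V := CV) h (- T) T b), (RInt_Chasles (V := CV) h a (- T));
    auto.
Qed.

Lemma Cnorm_RInt_sub_central (a b : R) : a <= - T -> T <= b ->
  Cnorm (@minus CV (RInt (V := CV) h a b) (RInt (V := CV) h (- T) T)) <= 2 * M / T.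
Proof.
  intros Ha Hb; rewrite RInt_split_central by assumption.
  replace (@minus CV _ _) with (@plus CV (RInt (V := CV) h a (- T)) (RInt (V := CV) h T b))
    by (destruct (RInt (V := CV) h a (- T)), (RInt (V := CV) h (- T) T), (RInt (V := CV) h T b);
        C_unfold; f_equal; ring).
  eapply Rle_trans; [apply (norm_triangle (K := R_AbsRing) (V := CV)) |].
  pose proof (Cnorm_RInt_left_tail a Ha); pose proof (Cnorm_RInt_right_tail b Hb).
  unfold Rdiv in *; lra.
Qed.

End InverseSquareTails.

Lemma ex_RInt_gen_inv_sqr_decay (h : R -> C) (M T : R) :
  (forall a b, ex_RInt (V := CV) h a b) -> 0 <= M -> 0 < T ->
  (forall t, T <= Rabs t -> Cnorm (h t) <= M / t ^ 2) ->
  ex_RInt_gen (V := CV) h (Rbar_locally m_infty) (Rbar_locally p_infty).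
Proof.
  intros Hex HM HT Hb.
  assert (HL : exists L, filterlim (fun ab : R * R => RInt (V := CV) h (fst ab) (snd ab))
            (filter_prod (Rbar_locally m_infty) (Rbar_locally p_infty)) (locally L)).
  { refine (proj1 (@Hierarchy.filterlim_locally_cauchy _ CV _
       (@Hierarchy.filter_prod_proper _ _ _ _ (Rbar_locally_filter _) (Rbar_locally_filter _)) _) _).
    intros [eps Heps].
    set (T' := Rmax T (4 * M / eps + 1)).
    assert (HT' : T <= T' /\ 4 * M / eps + 1 <= T') by (split; [apply Rmax_l | apply Rmax_r]).
    exists (fun ab : R * R => fst ab <= - T' /\ T' <= snd ab); split.
    - apply (Filter_prod _ _ _ (fun a => a <= - T') (fun b => T' <= b));
        [exists (- T') | exists T' | ]; simpl; intros; auto; lra.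
    - intros [a b] [a' b'] [Ha Hb'] [Ha' Hb'']; simpl in *.
      apply (norm_compat1 (K := R_AbsRing) (V := CV)).
      assert (Hdecay : forall t, T' <= Rabs t -> Cnorm (h t) <= M / t ^ 2) by (intros; apply Hb; lra).
      pose proof (Cnorm_RInt_sub_central h M T' Hex HM ltac:(lra) Hdecay a b Ha Hb') as B1.
      pose proof (Cnorm_RInt_sub_central h M T' Hex HM ltac:(lra) Hdecay a' b' Ha' Hb'') as B2.
      rewrite Cnorm_minus_sym in B1.
      eapply Rle_lt_trans; [apply (Cnorm_minus_triangle _ (RInt (V := CV) h (- T') T')) |].
      assert (4 * M / T' < eps).
      { apply Rlt_div_l; [lra |].
        assert (eps * (4 * M / eps) = 4 * M) by (field; lra); nra. }
      replace (2 * M / T') with (4 * M / T' / 2) in B1, B2 by (field; lra); lra. }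
  destruct HL as [L HL]; exists L.
  intros P HP; unfold filtermapi; eapply filter_imp; [| exact (HL P HP)].
  intros [a b] Hab; exists (RInt (V := CV) h a b); split; auto.
  apply RInt_correct; auto.
Qed.

Lemma is_RInt_gen_symmetric (h : R -> C) (L : C) :
  is_RInt_gen (V := CV) h (Rbar_locally m_infty) (Rbar_locally p_infty) L ->
  filterlim (fun r => RInt (V := CV) h (- r) r) (Rbar_locally p_infty) (locally (T := CV) L).
Proof.
  intros H P HP; destruct (H P HP) as [Q S [M1 HM1] [M2 HM2] HQS].
  exists (Rmax (- M1) M2); intros r Hr.
  assert (Q (- r)) by (apply HM1; pose proof (Rmax_l (- M1) M2); lra).
  assert (S r) by (apply HM2; pose proof (Rmax_r (- M1) M2); lra).
  destruct (HQS (- r) r) as [y [Hy Py]]; auto; simpl in Hy.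
  rewrite (is_RInt_unique _ _ _ _ Hy); exact Py.
Qed.

Lemma lim_Cnorm_sub_le (u : R -> C) (L c : C) (B r0 : R) :
  filterlim u (Rbar_locally p_infty) (locally (T := CV) L) ->
  (forall r, r0 <= r -> Cnorm (@minus CV (u r) c) <= B) -> Cnorm (@minus CV L c) <= B.
Proof.
  intros Hu Hb; apply Rnot_lt_le; intro Hlt.
  assert (Heps : 0 < Cnorm (@minus CV L c) - B) by lra.
  destruct (proj1 (filterlim_locally_ball_norm (K := R_AbsRing) u L) Hu (mkposreal _ Heps))
    as [R0 HR0].
  set (r := Rmax (R0 + 1) r0).
  assert (R0 < r /\ r0 <= r) as [H1 H2]
    by (unfold r; split; [pose proof (Rmax_l (R0 + 1) r0); lra | apply Rmax_r]).
  pose proof (HR0 r H1) as Hr; unfold ball_norm in Hr; simpl in Hr.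
  pose proof (Hb r H2); pose proof (Cnorm_minus_triangle L (u r) c).
  rewrite Cnorm_minus_sym in Hr; lra.
Qed.

Lemma Cnorm_RInt_gen_sub_central (h : R -> C) (L : C) (M s : R) :
  (forall a b, ex_RInt (V := CV) h a b) -> 0 <= M -> 0 < s ->
  is_RInt_gen (V := CV) h (Rbar_locally m_infty) (Rbar_locally p_infty) L ->
  (forall t, s <= Rabs t -> Cnorm (h t) <= M / t ^ 2) ->
  Cnorm (@minus CV L (RInt (V := CV) h (- s) s)) <= 2 * M / s.
Proof.
  intros Hex HM Hs HL Hb.
  apply (lim_Cnorm_sub_le _ L _ _ s (is_RInt_gen_symmetric h L HL)).
  intros r Hr; apply (Cnorm_RInt_sub_central h M s); auto; lra.
Qed.

Lemma is_RInt_inv_sum_sqr (K rho a b : R) : 0 < rho ->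
  is_RInt (fun t => K / (t ^ 2 + rho ^ 2)) a b
    (K / rho * atan (b / rho) - K / rho * atan (a / rho)).
Proof.
  intros Hr.
  apply (is_RInt_derive (V := R_CompleteNormedModule) (fun t => K / rho * atan (t / rho))).
  - intros x _; apply is_derive_Reals.
    replace (K / (x ^ 2 + rho ^ 2)) with (K / rho * (/ (1 + (x / rho) ^ 2) * / rho))
      by (field; split; nra).
    apply derivable_pt_lim_scal.
    apply (derivable_pt_lim_comp (fun t => t / rho) atan x (/ rho)).
    + apply is_derive_Reals; auto_derive; auto; field; lra.
    + apply derivable_pt_lim_atan.
  - intros x _; apply (ex_derive_continuous (K := R_AbsRing) (V := R_NormedModule)).
    auto_derive; nra.
Qed.

Lemma Cnorm_RInt_le_inv_sum_sqr (h : R -> C) (K rho a b : R) :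
  0 < rho -> a <= b -> 0 <= K -> ex_RInt (V := CV) h a b ->
  (forall t, a <= t <= b -> Cnorm (h t) <= K / (t ^ 2 + rho ^ 2)) ->
  Cnorm (RInt (V := CV) h a b) <= K * PI / rho.
Proof.
  intros Hr Hab HK Hex Hb; eapply Rle_trans.
  - apply (Cnorm_RInt_le h _ a b _ Hab Hex Hb (is_RInt_inv_sum_sqr K rho a b Hr)).
  - pose proof (atan_bound (b / rho)); pose proof (atan_bound (a / rho)).
    assert (0 <= K / rho) by (apply Rdiv_le_0_compat; lra).
    replace (K * PI / rho) with (K / rho * (PI / 2) - K / rho * (- (PI / 2))) by (field; lra).
    apply Rplus_le_compat; [| apply Ropp_le_contravar]; apply Rmult_le_compat_l; lra.
Qed.

(** * Oscillatory integrals and integration by parts *)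

(* [modulate u k t] is [u t * e^{-ikt}] and [modulate_prim u k t] is [u t * (i/k) e^{-ikt}], where
   [(i/k) e^{-ikt}] is a primitive of [e^{-ikt}]; both are written out in components so that
   [auto_derive] applies. *)
Definition modulate (u : R -> R) (k t : R) : C :=
  (u t * cos (k * t), - (u t * sin (k * t))).

Definition modulate_prim (u : R -> R) (k t : R) : C :=
  (u t * sin (k * t) / k, u t * cos (k * t) / k).

Definition ibp3_boundary (u u1 u2 : R -> R) (k t : R) : C :=
  (u t * sin (k * t) / k + u1 t * cos (k * t) / k ^ 2 - u2 t * sin (k * t) / k ^ 3,
   u t * cos (k * t) / k - u1 t * sin (k * t) / k ^ 2 - u2 t * cos (k * t) / k ^ 3).

Lemma modulate_expi (u : R -> R) (k t : R) :
  modulate u k t = Cmult (RtoC (u t)) (expi (- (k * t))).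
Proof. unfold modulate, expi, Cmult, RtoC; simpl; rewrite cos_neg, sin_neg; f_equal; ring. Qed.

Lemma continuous_cos_linear (k t : R) : continuous (fun s => cos (k * s)) t.
Proof.
  apply (ex_derive_continuous (K := R_AbsRing) (V := R_NormedModule) (fun s => cos (k * s))).
  auto_derive; auto.
Qed.

Lemma continuous_sin_linear (k t : R) : continuous (fun s => sin (k * s)) t.
Proof.
  apply (ex_derive_continuous (K := R_AbsRing) (V := R_NormedModule) (fun s => sin (k * s))).
  auto_derive; auto.
Qed.

Lemma continuous_modulate (u : R -> R) (k t : R) : continuous u t -> continuous (modulate u k) t.
Proof.
  intros Hu; apply continuous_C_pair.
  - apply continuous_mult_R; auto using continuous_cos_linear.
  - apply (continuous_opp (V := R_NormedModule) (fun s => u s * sin (k * s))).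
    apply continuous_mult_R; auto using continuous_sin_linear.
Qed.

Lemma continuous_modulate_prim (u : R -> R) (k t : R) :
  continuous u t -> continuous (modulate_prim u k) t.
Proof.
  intros Hu; apply continuous_C_pair; apply continuous_mult_R; try apply continuous_const;
    apply continuous_mult_R; auto using continuous_cos_linear, continuous_sin_linear.
Qed.

Lemma Derive_of_is_derive (u du : R -> R) (t : R) :
  (forall t, is_derive u t (du t)) -> Derive (fun x => u x) t = du t.
Proof. intros H; apply is_derive_unique, H. Qed.

Lemma continuous_of_is_derive (u du : R -> R) (t : R) :
  (forall t, is_derive u t (du t)) -> continuous u t.
Proof.
  intros H; apply (ex_derive_continuous (K := R_AbsRing) (V := R_NormedModule) u).
  eexists; apply H.
Qed.

Lemma Rabs_mult_trig_div (a s c : R) : Rabs s <= 1 -> c <> 0 -> Rabs (a * s / c) <= Rabs a / Rabs c.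
Proof.
  intros Hs Hc; unfold Rdiv; rewrite !Rabs_mult, Rabs_inv.
  assert (0 < / Rabs c) by (apply Rinv_0_lt_compat, Rabs_pos_lt, Hc).
  pose proof (Rabs_pos a); apply Rmult_le_compat_r; [lra |].
  rewrite <- (Rmult_1_r (Rabs a)) at 2; apply Rmult_le_compat_l; auto.
Qed.

Lemma Rabs_sin_le_1 (x : R) : Rabs (sin x) <= 1.
Proof. apply Rabs_le, SIN_bound. Qed.

Lemma Rabs_cos_le_1 (x : R) : Rabs (cos x) <= 1.
Proof. apply Rabs_le, COS_bound. Qed.

Lemma Cnorm_modulate_prim_le (u : R -> R) (k t : R) : k <> 0 ->
  Cnorm (modulate_prim u k t) <= sqrt 2 * (Rabs (u t) / Rabs k).
Proof.
  intros Hk; apply Cnorm_le_components; simpl;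
    apply Rabs_mult_trig_div; auto using Rabs_sin_le_1, Rabs_cos_le_1.
Qed.

Lemma Cnorm_ibp3_boundary_le (u u1 u2 : R -> R) (k t : R) : k <> 0 ->
  Cnorm (ibp3_boundary u u1 u2 k t)
  <= sqrt 2 * (Rabs (u t) / Rabs k + Rabs (u1 t) / Rabs (k ^ 2) + Rabs (u2 t) / Rabs (k ^ 3)).
Proof.
  intros Hk; assert (k ^ 2 <> 0 /\ k ^ 3 <> 0) as [Hk2 Hk3] by (split; apply pow_nonzero; auto).
  unfold ibp3_boundary; apply Cnorm_le_components; cbn [fst snd]; unfold Rminus.
  - pose proof (Rabs_mult_trig_div (u t) _ k (Rabs_sin_le_1 (k * t)) Hk).
    pose proof (Rabs_mult_trig_div (u1 t) _ (k ^ 2) (Rabs_cos_le_1 (k * t)) Hk2).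
    pose proof (Rabs_mult_trig_div (u2 t) _ (k ^ 3) (Rabs_sin_le_1 (k * t)) Hk3).
    pose proof (Rabs_triang (u t * sin (k * t) / k + u1 t * cos (k * t) / k ^ 2)
                  (- (u2 t * sin (k * t) / k ^ 3))).
    pose proof (Rabs_triang (u t * sin (k * t) / k) (u1 t * cos (k * t) / k ^ 2)).
    rewrite Rabs_Ropp in *; lra.
  - pose proof (Rabs_mult_trig_div (u t) _ k (Rabs_cos_le_1 (k * t)) Hk).
    pose proof (Rabs_mult_trig_div (u1 t) _ (k ^ 2) (Rabs_sin_le_1 (k * t)) Hk2).
    pose proof (Rabs_mult_trig_div (u2 t) _ (k ^ 3) (Rabs_cos_le_1 (k * t)) Hk3).
    pose proof (Rabs_triang (u t * cos (k * t) / k + - (u1 t * sin (k * t) / k ^ 2))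
                  (- (u2 t * cos (k * t) / k ^ 3))).
    pose proof (Rabs_triang (u t * cos (k * t) / k) (- (u1 t * sin (k * t) / k ^ 2))).
    rewrite !Rabs_Ropp in *; lra.
Qed.

Lemma is_RInt_modulate_ibp1 (u du : R -> R) (l a b : R) : l <> 0 ->
  (forall t, is_derive u t (du t)) -> (forall t, continuous du t) ->
  is_RInt (V := CV) (fun t => @plus CV (modulate u l t) (modulate_prim du l t)) a b
    (@minus CV (modulate_prim u l b) (modulate_prim u l a)).
Proof.
  intros Hl Hd Hc; apply (is_RInt_derive (V := CV) (modulate_prim u l)).
  - intros x _; unfold modulate_prim.
    match goal with |- is_derive _ _ ?v => replace v with
      (((du x * sin (l * x) / l + u x * cos (l * x)), (du x * cos (l * x) / l - u x * sin (l * x))) : C)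
    end.
    2: { unfold modulate, modulate_prim; C_unfold; f_equal; field; auto. }
    apply is_derive_C_pair; auto_derive; try (repeat split; eexists; eauto);
      rewrite (Derive_of_is_derive u du x Hd); field; auto.
  - intros x _; apply (continuous_plus (V := CV)).
    + apply continuous_modulate; eapply continuous_of_is_derive; eauto.
    + apply continuous_modulate_prim; auto.
Qed.

Lemma filterlim_C_plus {T : Type} {F : (T -> Prop) -> Prop} {FF : Filter F}
  (u v : T -> C) (lu lv : C) :
  filterlim u F (locally (T := CV) lu) -> filterlim v F (locally (T := CV) lv) ->
  filterlim (fun x => @plus CV (u x) (v x)) F (locally (T := CV) (@plus CV lu lv)).
Proof. intros Hu Hv; eapply filterlim_comp_2; eauto; apply (filterlim_plus (K := R_AbsRing) (V := CV)). Qed.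

Lemma filterlim_C_minus {T : Type} {F : (T -> Prop) -> Prop} {FF : Filter F}
  (u v : T -> C) (lu lv : C) :
  filterlim u F (locally (T := CV) lu) -> filterlim v F (locally (T := CV) lv) ->
  filterlim (fun x => @minus CV (u x) (v x)) F (locally (T := CV) (@minus CV lu lv)).
Proof.
  intros Hu Hv; apply filterlim_C_plus; auto.
  eapply filterlim_comp; eauto; apply (filterlim_opp (K := R_AbsRing) (V := CV)).
Qed.

Lemma filterlim_C_scal {T : Type} {F : (T -> Prop) -> Prop} {FF : Filter F}
  (c : R) (u : T -> C) (lu : C) :
  filterlim u F (locally (T := CV) lu) ->
  filterlim (fun x => @scal _ CV c (u x)) F (locally (T := CV) (@scal _ CV c lu)).
Proof.
  intros Hu; apply (filterlim_comp_2 (G := locally c) (H := locally lu) (fun _ => c) u (@scal _ CV));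
    [apply filterlim_const | exact Hu | apply (filterlim_scal (K := R_AbsRing) (V := CV))].
Qed.

Lemma filterlim_zero_of_Cnorm_le_inv (v : R -> C) (K T : R) :
  (forall r, T <= r -> Cnorm (v r) <= K / r) ->
  filterlim v (Rbar_locally p_infty) (locally (T := CV) zero).
Proof.
  intros Hv; apply (filterlim_locally_ball_norm (K := R_AbsRing) (U := CV)); intros [eps Heps].
  exists (Rmax (Rmax T 1) (Rabs K / eps)); intros r Hr.
  pose proof (Rmax_l (Rmax T 1) (Rabs K / eps)); pose proof (Rmax_r (Rmax T 1) (Rabs K / eps)).
  pose proof (Rmax_l T 1); pose proof (Rmax_r T 1).
  unfold ball_norm; simpl; rewrite (minus_zero_r (G := CV)).
  eapply Rle_lt_trans; [apply Hv; lra |].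
  apply Rlt_div_l; [lra |].
  assert (eps * (Rabs K / eps) = Rabs K) by (field; lra).
  pose proof (Rle_abs K); nra.
Qed.

Section TripleIntegrationByParts.

Variables (u u1 u2 u3 : R -> R) (k : R).
Hypothesis k_neq0 : k <> 0.
Hypothesis u_deriv : forall t, is_derive u t (u1 t).
Hypothesis u1_deriv : forall t, is_derive u1 t (u2 t).
Hypothesis u2_deriv : forall t, is_derive u2 t (u3 t).
Hypothesis u3_cont : forall t, continuous u3 t.

Lemma ex_RInt_modulate_prim3 (a b : R) : ex_RInt (V := CV) (modulate_prim u3 k) a b.
Proof. apply ex_RInt_C_continuous; intros; apply continuous_modulate_prim, u3_cont. Qed.

Lemma is_RInt_modulate_ibp3 (a b : R) :
  is_RInt (V := CV) (fun t => @minus CV (modulate u k t) (@scal _ CV (/ k ^ 2) (modulate_prim u3 k t)))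
    a b (@minus CV (ibp3_boundary u u1 u2 k b) (ibp3_boundary u u1 u2 k a)).
Proof.
  apply (is_RInt_derive (V := CV) (ibp3_boundary u u1 u2 k)).
  - intros x _; unfold ibp3_boundary.
    match goal with |- is_derive _ _ ?l => replace l with
      (((u1 x * sin (k * x) / k + u x * cos (k * x)
         + (u2 x * cos (k * x) / k ^ 2 - u1 x * sin (k * x) / k))
        - (u3 x * sin (k * x) / k ^ 3 + u2 x * cos (k * x) / k ^ 2),
        (u1 x * cos (k * x) / k - u x * sin (k * x))
        - (u2 x * sin (k * x) / k ^ 2 + u1 x * cos (k * x) / k)
        - (u3 x * cos (k * x) / k ^ 3 - u2 x * sin (k * x) / k ^ 2)) : C)
    end.
    2: { unfold modulate, modulate_prim; C_unfold; f_equal; field; auto. }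
    apply is_derive_C_pair; auto_derive; try (repeat split; eexists; eauto);
      rewrite (Derive_of_is_derive u u1 x u_deriv), (Derive_of_is_derive u1 u2 x u1_deriv),
        (Derive_of_is_derive u2 u3 x u2_deriv); field; auto.
  - intros x _; apply (continuous_minus (V := CV)).
    + apply continuous_modulate; eapply continuous_of_is_derive; eauto.
    + apply (continuous_scal (V := CV) (fun _ => / k ^ 2)); [apply continuous_const |].
      apply continuous_modulate_prim, u3_cont.
Qed.

Lemma RInt_modulate_ibp3 (a b : R) :
  RInt (V := CV) (modulate u k) a b =
  @plus CV (@minus CV (ibp3_boundary u u1 u2 k b) (ibp3_boundary u u1 u2 k a))
    (@scal _ CV (/ k ^ 2) (RInt (V := CV) (modulate_prim u3 k) a b)).
Proof.
  apply is_RInt_unique; eapply (is_RInt_ext (V := CV)).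
  2: { apply (is_RInt_plus (V := CV)); [apply is_RInt_modulate_ibp3 |].
       apply (is_RInt_scal (V := CV)), RInt_correct, ex_RInt_modulate_prim3. }
  intros x _; simpl; destruct (modulate u k x), (modulate_prim u3 k x); C_unfold; f_equal; ring.
Qed.

Variables (M T : R).
Hypothesis M_ge0 : 0 <= M.
Hypothesis T_gt0 : 0 < T.
Hypothesis u_decay : forall t, T <= Rabs t ->
  Rabs (u t) <= M / Rabs t /\ Rabs (u1 t) <= M / Rabs t /\
  Rabs (u2 t) <= M / Rabs t /\ Rabs (u3 t) <= M / t ^ 2.

Lemma Cnorm_ibp3_boundary_decay (t : R) : T <= Rabs t ->
  Cnorm (ibp3_boundary u u1 u2 k t)
  <= sqrt 2 * (M / Rabs k + M / Rabs (k ^ 2) + M / Rabs (k ^ 3)) / Rabs t.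
Proof.
  intros Ht; eapply Rle_trans; [apply Cnorm_ibp3_boundary_le, k_neq0 |].
  destruct (u_decay t Ht) as (Hu & Hu1 & Hu2 & _).
  assert (0 < Rabs k /\ 0 < Rabs (k ^ 2) /\ 0 < Rabs (k ^ 3)) as (? & ? & ?)
    by (repeat split; apply Rabs_pos_lt; try apply pow_nonzero; auto).
  replace (sqrt 2 * (M / Rabs k + M / Rabs (k ^ 2) + M / Rabs (k ^ 3)) / Rabs t)
    with (sqrt 2 * (M / Rabs t / Rabs k + M / Rabs t / Rabs (k ^ 2) + M / Rabs t / Rabs (k ^ 3)))
    by (field; lra).
  apply Rmult_le_compat_l; [apply sqrt_pos |].
  unfold Rdiv in *; repeat apply Rplus_le_compat; apply Rmult_le_compat_r;
    try (left; apply Rinv_0_lt_compat; lra); lra.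
Qed.

(* After three integrations by parts the remaining integrand is [O(1/t^2)], hence absolutely
   convergent, while the boundary terms are [O(1/t)]. *)
Lemma modulate_lim_ibp3 : exists Lam : C,
  is_RInt_gen (V := CV) (modulate_prim u3 k) (Rbar_locally m_infty) (Rbar_locally p_infty) Lam /\
  filterlim (fun r => RInt (V := CV) (modulate u k) (- r) r) (Rbar_locally p_infty)
    (locally (T := CV) (@scal _ CV (/ k ^ 2) Lam)).
Proof.
  assert (Hk : 0 < Rabs k) by (apply Rabs_pos_lt, k_neq0).
  destruct (ex_RInt_gen_inv_sqr_decay (modulate_prim u3 k) (sqrt 2 * M / Rabs k) T)
    as [Lam HLam]; auto using ex_RInt_modulate_prim3.
  { apply Rdiv_le_0_compat; [apply Rmult_le_pos; [apply sqrt_pos | lra] | lra]. }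
  { intros t Ht; eapply Rle_trans; [apply Cnorm_modulate_prim_le, k_neq0 |].
    destruct (u_decay t Ht) as (_ & _ & _ & H3).
    assert (t <> 0) by (intro; subst; rewrite Rabs_R0 in Ht; lra).
    assert (t ^ 2 > 0) by (apply pow2_gt_0; auto).
    replace (sqrt 2 * M / Rabs k / t ^ 2) with (sqrt 2 * (M / t ^ 2 / Rabs k)) by (field; lra).
    apply Rmult_le_compat_l; [apply sqrt_pos |].
    unfold Rdiv; apply Rmult_le_compat_r; [left; apply Rinv_0_lt_compat; lra | exact H3]. }
  exists Lam; split; [exact HLam |].
  set (K0 := sqrt 2 * (M / Rabs k + M / Rabs (k ^ 2) + M / Rabs (k ^ 3))).
  assert (Hbdry : forall sgn : R -> R, (forall r, 0 <= r -> Rabs (sgn r) = r) ->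
    filterlim (fun r => ibp3_boundary u u1 u2 k (sgn r)) (Rbar_locally p_infty)
      (locally (T := CV) zero)).
  { intros sgn Hsgn; apply (filterlim_zero_of_Cnorm_le_inv _ K0 T); intros r Hr.
    rewrite <- (Hsgn r) at 2 by lra; apply Cnorm_ibp3_boundary_decay; rewrite Hsgn; lra. }
  eapply filterlim_ext; [intros r; symmetry; apply RInt_modulate_ibp3 |].
  replace (@scal _ CV (/ k ^ 2) Lam)
    with (@plus CV (@minus CV zero zero) (@scal _ CV (/ k ^ 2) Lam))
    by (destruct Lam; C_unfold; f_equal; ring).
  apply filterlim_C_plus; [apply filterlim_C_minus |].
  - apply (Hbdry (fun r => r)); intros; apply Rabs_right; lra.
  - apply (Hbdry Ropp); intros; rewrite Rabs_Ropp; apply Rabs_right; lra.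
  - apply filterlim_C_scal, is_RInt_gen_symmetric, HLam.
Qed.

End TripleIntegrationByParts.

(** * Fubini's theorem on rectangles *)

Definition jcontinuous (h : R -> R -> R) : Prop :=
  forall a b, continuous (fun p : R * R => h (fst p) (snd p)) (a, b).

Lemma continuous_jcontinuous_comp (h : R -> R -> R) (p q : R -> R) (x : R) :
  jcontinuous h -> continuous p x -> continuous q x -> continuous (fun t => h (p t) (q t)) x.
Proof.
  intros Hh Hp Hq.
  apply (continuous_comp_2 (U := R_UniformSpace) (V := R_UniformSpace) (W := R_UniformSpace)
    (X := R_UniformSpace) p q h); auto.
Qed.

Lemma jcontinuous_partial1 (h : R -> R -> R) (a b : R) :
  jcontinuous h -> continuous (fun t => h t b) a.
Proof.
  intros H; apply (continuous_jcontinuous_comp h (fun t => t) (fun _ => b)); auto.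
  - apply continuous_id.
  - apply continuous_const.
Qed.

Lemma jcontinuous_partial2 (h : R -> R -> R) (a b : R) :
  jcontinuous h -> continuous (fun t => h a t) b.
Proof.
  intros H; apply (continuous_jcontinuous_comp h (fun _ => a) (fun t => t)); auto.
  - apply continuous_const.
  - apply continuous_id.
Qed.

Lemma jcontinuous_swap (h : R -> R -> R) : jcontinuous h -> jcontinuous (fun a b => h b a).
Proof.
  intros H a b.
  apply (continuous_comp_2 (U := prod_UniformSpace R_UniformSpace R_UniformSpace)
    (V := R_UniformSpace) (W := R_UniformSpace) (X := R_UniformSpace) snd fst h (a, b)).
  - apply continuous_snd.
  - apply continuous_fst.
  - apply H.
Qed.

Lemma jcontinuous_lift1 (p : R -> R) : (forall x, continuous p x) -> jcontinuous (fun a b => p a).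
Proof.
  intros H a b.
  apply (continuous_comp (U := prod_UniformSpace R_UniformSpace R_UniformSpace)
    (V := R_UniformSpace) (W := R_UniformSpace) fst p); [apply continuous_fst | apply H].
Qed.

Lemma jcontinuous_lift2 (p : R -> R) : (forall x, continuous p x) -> jcontinuous (fun a b => p b).
Proof.
  intros H a b.
  apply (continuous_comp (U := prod_UniformSpace R_UniformSpace R_UniformSpace)
    (V := R_UniformSpace) (W := R_UniformSpace) snd p); [apply continuous_snd | apply H].
Qed.

Lemma jcontinuous_const (c : R) : jcontinuous (fun _ _ => c).
Proof. intros a b; apply continuous_const. Qed.

Lemma jcontinuous_opp (h : R -> R -> R) : jcontinuous h -> jcontinuous (fun a b => - h a b).
Proof. intros H a b; apply (continuous_opp (V := R_NormedModule) (fun p : R * R => h (fst p) (snd p))); auto. Qed.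

Lemma jcontinuous_plus (h g : R -> R -> R) :
  jcontinuous h -> jcontinuous g -> jcontinuous (fun a b => h a b + g a b).
Proof.
  intros Hh Hg a b; apply (continuous_plus (V := R_NormedModule)
    (fun p : R * R => h (fst p) (snd p)) (fun p : R * R => g (fst p) (snd p))); auto.
Qed.

Lemma jcontinuous_minus (h g : R -> R -> R) :
  jcontinuous h -> jcontinuous g -> jcontinuous (fun a b => h a b - g a b).
Proof.
  intros Hh Hg a b; apply (continuous_minus (V := R_NormedModule)
    (fun p : R * R => h (fst p) (snd p)) (fun p : R * R => g (fst p) (snd p))); auto.
Qed.

Lemma jcontinuous_mult (h g : R -> R -> R) :
  jcontinuous h -> jcontinuous g -> jcontinuous (fun a b => h a b * g a b).
Proof.
  intros Hh Hg a b; apply (continuous_mult (K := R_AbsRing)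
    (fun p : R * R => h (fst p) (snd p)) (fun p : R * R => g (fst p) (snd p))); auto.
Qed.

Lemma ex_RInt_jcontinuous (h : R -> R -> R) (b x y : R) :
  jcontinuous h -> ex_RInt (fun a => h a b) x y.
Proof.
  intros H; apply (ex_RInt_continuous (V := R_CompleteNormedModule)); intros.
  apply jcontinuous_partial1, H.
Qed.

Lemma is_derive_RInt_jcontinuous (h hb : R -> R -> R) (x y : R) :
  (forall a b, is_derive (fun b' => h a b') b (hb a b)) -> jcontinuous h -> jcontinuous hb ->
  forall b, is_derive (fun b' => RInt (fun a => h a b') x y) b (RInt (fun a => hb a b) x y).
Proof.
  intros Hd Hc Hbc b.
  rewrite <- (RInt_ext (fun t => Derive (fun u => h t u) b))
    by (intros; apply is_derive_unique, Hd).
  apply (is_derive_RInt_param (fun x t => h t x) x y b).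
  - apply filter_forall; intros x0 t _; eexists; apply Hd.
  - intros t _.
    replace (fun u v : R => Derive (fun z : R => h v z) u) with (fun u v => hb v u)
      by (do 2 (apply functional_extensionality; intros); symmetry; apply is_derive_unique, Hd).
    apply continuity_2d_pt_filterlim, (jcontinuous_swap hb Hbc).
  - apply filter_forall; intros; apply ex_RInt_jcontinuous, Hc.
Qed.

Lemma continuous_RInt_jcontinuous (h hb : R -> R -> R) (x y : R) :
  (forall a b, is_derive (fun b' => h a b') b (hb a b)) -> jcontinuous h -> jcontinuous hb ->
  forall b, continuous (fun b' => RInt (fun a => h a b') x y) b.
Proof.
  intros Hd Hc Hbc b; apply (ex_derive_continuous (K := R_AbsRing) (V := R_NormedModule)).
  eexists; apply is_derive_RInt_jcontinuous; auto.
Qed.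

Lemma is_derive_RInt_upper (h : R -> R -> R) (x y b : R) : jcontinuous h ->
  is_derive (fun t => RInt (fun a => h a b) x t) y (h y b).
Proof.
  intros Hh; apply (is_derive_RInt (V := R_CompleteNormedModule) (fun a => h a b)
    (RInt (fun a => h a b) x) x y).
  - apply filter_forall; intros; apply RInt_correct, ex_RInt_jcontinuous, Hh.
  - apply jcontinuous_partial1, Hh.
Qed.

(* As a function of [beta] the left-hand side vanishes at [alpha] and has derivative
   [t |-> RInt (fun b => h t b) gamma delta], so it is the right-hand side by the FTC. *)
Lemma RInt_RInt_swap (h ha hb : R -> R -> R) (alpha beta gamma delta : R) :
  (forall a b, is_derive (fun a' => h a' b) a (ha a b)) ->
  (forall a b, is_derive (fun b' => h a b') b (hb a b)) ->
  jcontinuous h -> jcontinuous ha -> jcontinuous hb ->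
  RInt (fun b => RInt (fun a => h a b) alpha beta) gamma delta
  = RInt (fun a => RInt (fun b => h a b) gamma delta) alpha beta.
Proof.
  intros Ha Hb Hc Hac Hbc.
  set (G := fun t => RInt (fun b => h t b) gamma delta).
  assert (HG : forall t, continuous G t).
  { intros t; apply (continuous_RInt_jcontinuous (fun b a => h a b) (fun b a => ha a b));
      auto using jcontinuous_swap. }
  set (Phi := fun t => RInt (fun b => RInt (fun a => h a b) alpha t) gamma delta).
  assert (HPhi : forall t, is_derive Phi t (G t)).
  { intros t; unfold Phi, G.
    rewrite <- (RInt_ext (fun b => Derive (fun u => RInt (fun a => h a b) alpha u) t))
      by (intros; apply is_derive_unique, is_derive_RInt_upper, Hc).
    apply (is_derive_RInt_param (fun x b => RInt (fun a => h a b) alpha x) gamma delta t).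
    - apply filter_forall; intros; eexists; apply is_derive_RInt_upper, Hc.
    - intros b _.
      replace (fun u v : R => Derive (fun z : R => RInt (fun a => h a v) alpha z) u) with h
        by (do 2 (apply functional_extensionality; intros);
            symmetry; apply is_derive_unique, is_derive_RInt_upper, Hc).
      apply continuity_2d_pt_filterlim, Hc.
    - apply filter_forall; intros y.
      apply (ex_RInt_continuous (V := R_CompleteNormedModule)); intros.
      apply (continuous_RInt_jcontinuous h hb alpha y); auto. }
  pose proof (is_RInt_unique _ _ _ _
    (is_RInt_derive (V := R_CompleteNormedModule) Phi G alpha beta (fun x _ => HPhi x) (fun x _ => HG x)))
    as HFTC.
  assert (Phi alpha = 0).
  { unfold Phi; rewrite <- (RInt_ext (fun _ => 0)) by (intros; rewrite RInt_point; reflexivity).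
    rewrite RInt_const; C_unfold; ring. }
  change (Phi beta = RInt G alpha beta).
  unfold minus, plus, opp in HFTC; simpl in HFTC; lra.
Qed.

Lemma RInt_RInt_swap_pair (p pa pb q qa qb : R -> R -> R) (alpha beta gamma delta : R) :
  (forall a b, is_derive (fun a' => p a' b) a (pa a b)) ->
  (forall a b, is_derive (fun b' => p a b') b (pb a b)) ->
  (forall a b, is_derive (fun a' => q a' b) a (qa a b)) ->
  (forall a b, is_derive (fun b' => q a b') b (qb a b)) ->
  jcontinuous p -> jcontinuous pa -> jcontinuous pb ->
  jcontinuous q -> jcontinuous qa -> jcontinuous qb ->
  RInt (V := CV) (fun b => RInt (V := CV) (fun a => ((p a b, q a b) : C)) alpha beta) gamma delta
  = RInt (V := CV) (fun a => RInt (V := CV) (fun b => ((p a b, q a b) : C)) gamma delta) alpha beta.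
Proof.
  intros Dpa Dpb Dqa Dqb Jp Jpa Jpb Jq Jqa Jqb.
  rewrite (RInt_ext (V := CV) _ (fun b => ((RInt (fun a => p a b) alpha beta,
                                            RInt (fun a => q a b) alpha beta) : C)))
    by (intros; apply RInt_C_pair; simpl; apply ex_RInt_jcontinuous; auto).
  rewrite (RInt_ext (V := CV) (fun a => RInt (V := CV) _ gamma delta)
    (fun a => ((RInt (fun b => p a b) gamma delta, RInt (fun b => q a b) gamma delta) : C)))
    by (intros; apply RInt_C_pair; simpl; apply (ex_RInt_jcontinuous (fun b a => _ a b));
        apply jcontinuous_swap; auto).
  rewrite !RInt_C_pair; simpl;
    try (apply (ex_RInt_continuous (V := R_CompleteNormedModule)); intros).
  - f_equal; eapply RInt_RInt_swap; eauto.
  - apply (continuous_RInt_jcontinuous (fun b a => p a b) (fun b a => pa a b));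
      auto using jcontinuous_swap.
  - apply (continuous_RInt_jcontinuous (fun b a => q a b) (fun b a => qa a b));
      auto using jcontinuous_swap.
  - apply (continuous_RInt_jcontinuous p pb); auto.
  - apply (continuous_RInt_jcontinuous q qb); auto.
Qed.

Lemma jcontinuous_comp_R (p : R -> R) (h : R -> R -> R) :
  (forall x, continuous p x) -> jcontinuous h -> jcontinuous (fun a b => p (h a b)).
Proof.
  intros Hp Hh a b; apply (continuous_comp (fun q : R * R => h (fst q) (snd q)) p); auto.
Qed.

Section ModulatedFubini.

Variables (g g1 gb : R -> R -> R) (k l : R).
Hypothesis g_deriv1 : forall a b, is_derive (fun a' => g a' b) a (g1 a b).
Hypothesis g_deriv2 : forall a b, is_derive (fun b' => g a b') b (gb a b).
Hypothesis g_cont : jcontinuous g.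
Hypothesis g1_cont : jcontinuous g1.
Hypothesis gb_cont : jcontinuous gb.

Lemma jcontinuous_phase : jcontinuous (fun a b => k * a + l * b).
Proof.
  apply jcontinuous_plus; apply jcontinuous_mult; try apply jcontinuous_const;
    [apply (jcontinuous_lift1 (fun a => a)) | apply (jcontinuous_lift2 (fun b => b))];
    intros; apply continuous_id.
Qed.

Ltac phase_continuity := repeat match goal with
  | |- jcontinuous (fun a b => _ + _) => apply jcontinuous_plus
  | |- jcontinuous (fun a b => _ - _) => apply jcontinuous_minus
  | |- jcontinuous (fun a b => _ * _) => apply jcontinuous_mult
  | |- jcontinuous (fun a b => - _) => apply jcontinuous_opp
  | |- jcontinuous (fun a b => cos _) =>
      apply (jcontinuous_comp_R cos (fun a b => k * a + l * b));
      [intros; apply continuous_cos | apply jcontinuous_phase]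
  | |- jcontinuous (fun a b => sin _) =>
      apply (jcontinuous_comp_R sin (fun a b => k * a + l * b));
      [intros; apply continuous_sin | apply jcontinuous_phase]
  | |- jcontinuous (fun a b => ?c) => apply (jcontinuous_const c)
  | |- jcontinuous _ => assumption
  end.

Lemma Derive_partial1 (a b : R) : Derive (fun a' => g a' b) a = g1 a b.
Proof. apply is_derive_unique, g_deriv1. Qed.

Lemma Derive_partial2 (a b : R) : Derive (fun b' => g a b') b = gb a b.
Proof. apply is_derive_unique, g_deriv2. Qed.

(* Reduce to real and imaginary parts, combining the two phases into [k a + l b]. *)
Lemma RInt_RInt_swap_modulated (alpha beta gamma delta : R) :
  RInt (V := CV) (fun b => RInt (V := CV)
    (fun a => Cmult (Cmult (RtoC (g a b)) (expi (- (k * a)))) (expi (- (l * b)))) alpha beta) gamma delta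
  = RInt (V := CV) (fun a => RInt (V := CV)
    (fun b => Cmult (Cmult (RtoC (g a b)) (expi (- (k * a)))) (expi (- (l * b)))) gamma delta) alpha beta.
Proof.
  assert (Hpair : forall a b,
    Cmult (Cmult (RtoC (g a b)) (expi (- (k * a)))) (expi (- (l * b)))
    = ((g a b * cos (k * a + l * b), - (g a b * sin (k * a + l * b))) : C)).
  { intros a b; unfold expi, Cmult, RtoC; simpl.
    rewrite cos_plus, sin_plus, !cos_neg, !sin_neg; f_equal; ring. }
  rewrite (RInt_ext (V := CV) _ (fun b => RInt (V := CV) (fun a => ((g a b * cos (k * a + l * b),
    - (g a b * sin (k * a + l * b))) : C)) alpha beta))
    by (intros; apply (RInt_ext (V := CV)); intros; apply Hpair).
  rewrite (RInt_ext (V := CV) (fun a => RInt (V := CV) _ gamma delta) (fun a => RInt (V := CV)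
    (fun b => ((g a b * cos (k * a + l * b), - (g a b * sin (k * a + l * b))) : C)) gamma delta))
    by (intros; apply (RInt_ext (V := CV)); intros; apply Hpair).
  apply (RInt_RInt_swap_pair _
    (fun a b => g1 a b * cos (k * a + l * b) - g a b * (k * sin (k * a + l * b)))
    (fun a b => gb a b * cos (k * a + l * b) - g a b * (l * sin (k * a + l * b)))
    _
    (fun a b => - (g1 a b * sin (k * a + l * b) + g a b * (k * cos (k * a + l * b))))
    (fun a b => - (gb a b * sin (k * a + l * b) + g a b * (l * cos (k * a + l * b))))).
  5-10: phase_continuity.
  - intros a b; auto_derive; [eexists; apply g_deriv1 | rewrite Derive_partial1; ring].
  - intros a b; auto_derive; [eexists; apply g_deriv2 | rewrite Derive_partial2; ring].
  - intros a b; auto_derive; [eexists; apply g_deriv1 | rewrite Derive_partial1; ring].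
  - intros a b; auto_derive; [eexists; apply g_deriv2 | rewrite Derive_partial2; ring].
Qed.

End ModulatedFubini.

(** * Fourier transforms of a plane slice *)

Lemma Rdiv_le_contravar (Cst x y : R) : 0 <= Cst -> 0 < x -> x <= y -> Cst / y <= Cst / x.
Proof. intros HC Hx Hxy; unfold Rdiv; apply Rmult_le_compat_l; auto; apply Rinv_le_contravar; auto. Qed.

Lemma Rdiv_le_compat_r (a b d : R) : a <= b -> 0 < d -> a / d <= b / d.
Proof. intros; unfold Rdiv; apply Rmult_le_compat_r; auto; left; apply Rinv_0_lt_compat; auto. Qed.

Lemma Rabs_le_sqrt (a Q : R) : a ^ 2 <= Q -> Rabs a <= sqrt Q.
Proof. intros H; rewrite <- sqrt_Rsqr_abs; apply sqrt_le_1_alt; unfold Rsqr; lra. Qed.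

Lemma sqrt_ge_1 (Q : R) : 1 <= Q -> 1 <= sqrt Q.
Proof. intros H; rewrite <- sqrt_1; apply sqrt_le_1_alt; auto. Qed.

(* The plane slice [(a, b) |-> f] at height [c] of a function [f] on [R^3]: [a^2 + b^2 + c^2] is the
   squared distance to the origin, so the bounds are conditions (iv) and (v) restricted to the
   derivatives that the argument uses. *)
Set Implicit Arguments.
Record slice_decay (g0 g1 g2 g3 gb : R -> R -> R) (c Cst : R) : Prop := {
  sd_C_ge0 : 0 <= Cst;
  sd_deriv1 : forall a b, is_derive (fun a' => g0 a' b) a (g1 a b);
  sd_deriv2 : forall a b, is_derive (fun a' => g1 a' b) a (g2 a b);
  sd_deriv3 : forall a b, is_derive (fun a' => g2 a' b) a (g3 a b);
  sd_derivb : forall a b, is_derive (fun b' => g0 a b') b (gb a b);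
  sd_cont0 : jcontinuous g0;
  sd_cont1 : jcontinuous g1;
  sd_cont2 : jcontinuous g2;
  sd_cont3 : jcontinuous g3;
  sd_contb : jcontinuous gb;
  sd_bound0 : forall a b, 1 < a ^ 2 + b ^ 2 + c ^ 2 ->
    Rabs (g0 a b) <= Cst / sqrt (a ^ 2 + b ^ 2 + c ^ 2);
  sd_bound1 : forall a b, 1 < a ^ 2 + b ^ 2 + c ^ 2 ->
    Rabs (g1 a b) <= Cst / (a ^ 2 + b ^ 2 + c ^ 2);
  sd_bound2 : forall a b, 1 < a ^ 2 + b ^ 2 + c ^ 2 ->
    Rabs (g2 a b) <= Cst / ((a ^ 2 + b ^ 2 + c ^ 2) * sqrt (a ^ 2 + b ^ 2 + c ^ 2));
  sd_bound3 : forall a b, 1 < a ^ 2 + b ^ 2 + c ^ 2 ->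
    Rabs (g3 a b) <= Cst / (a ^ 2 + b ^ 2 + c ^ 2) ^ 2;
  sd_boundb : forall a b, 1 < a ^ 2 + b ^ 2 + c ^ 2 ->
    Rabs (gb a b) <= Cst / (a ^ 2 + b ^ 2 + c ^ 2) }.
Unset Implicit Arguments.

Definition transform_const (Cst k : R) : R := sqrt 2 * Cst * PI / Rabs k ^ 3.

Section SliceTransform.

Variables (g0 g1 g2 g3 gb : R -> R -> R) (c Cst : R).
Hypothesis Hg : slice_decay g0 g1 g2 g3 gb c Cst.

Lemma slice_bounds_far (a b : R) : 2 <= Rabs a ->
  Rabs (g0 a b) <= Cst / Rabs a /\ Rabs (g1 a b) <= Cst / Rabs a /\
  Rabs (g2 a b) <= Cst / Rabs a /\ Rabs (g3 a b) <= Cst / a ^ 2.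
Proof.
  intros Ha; pose proof (sd_C_ge0 Hg) as HC.
  set (Q := a ^ 2 + b ^ 2 + c ^ 2).
  assert (HaQ : a ^ 2 <= Q) by (unfold Q; nra).
  assert (Ha2 : 4 <= a ^ 2) by (rewrite <- pow2_abs; nra).
  assert (HsQ : Rabs a <= sqrt Q) by (apply Rabs_le_sqrt; auto).
  assert (Hs1 : 1 <= sqrt Q) by (apply sqrt_ge_1; lra).
  assert (Habs : Rabs a <= a ^ 2) by (rewrite <- pow2_abs; nra).
  repeat split; (eapply Rle_trans; [first [apply (sd_bound0 Hg) | apply (sd_bound1 Hg)
    | apply (sd_bound2 Hg) | apply (sd_bound3 Hg)]; fold Q; lra | fold Q; apply Rdiv_le_contravar]);
    try lra; nra.
Qed.

Lemma slice_bounds_beyond (s a b : R) : 2 <= s -> s <= Rabs a ->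
  Rabs (g0 a b) <= Cst / s /\ Rabs (g1 a b) <= Cst / (b ^ 2 + s ^ 2) /\
  Rabs (g2 a b) <= Cst / (b ^ 2 + s ^ 2) /\ Rabs (g3 a b) <= Cst / ((b ^ 2 + s ^ 2) * a ^ 2) /\
  Rabs (gb a b) <= Cst / (b ^ 2 + s ^ 2).
Proof.
  intros Hs Ha; pose proof (sd_C_ge0 Hg) as HC.
  set (Q := a ^ 2 + b ^ 2 + c ^ 2).
  assert (Ha2 : s ^ 2 <= a ^ 2) by (rewrite <- (pow2_abs a); nra).
  assert (HbQ : b ^ 2 + s ^ 2 <= Q) by (unfold Q; nra).
  assert (HaQ : a ^ 2 <= Q) by (unfold Q; nra).
  assert (Hb2 : 0 <= b ^ 2) by nra.
  assert (HQ : 1 < Q) by nra.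
  assert (HsQ : s <= sqrt Q) by (eapply Rle_trans; [| apply (Rabs_le_sqrt a Q HaQ)]; lra).
  assert (Hs1 : 1 <= sqrt Q) by (apply sqrt_ge_1; lra).
  repeat split; (eapply Rle_trans; [first [apply (sd_bound0 Hg) | apply (sd_bound1 Hg)
    | apply (sd_bound2 Hg) | apply (sd_bound3 Hg) | apply (sd_boundb Hg)]; fold Q; lra
    | fold Q; apply Rdiv_le_contravar]); try lra; try nra.
  assert (0 < b ^ 2 + s ^ 2) by nra; assert (0 < a ^ 2) by nra; nra.
Qed.

Lemma slice_bound3_rho (a b : R) : 1 < b ^ 2 + c ^ 2 ->
  Rabs (g3 a b) <= Cst / ((b ^ 2 + c ^ 2) * (a ^ 2 + sqrt (b ^ 2 + c ^ 2) ^ 2)).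
Proof.
  intros Hr; pose proof (sd_C_ge0 Hg) as HC.
  rewrite pow2_sqrt by lra.
  eapply Rle_trans; [apply (sd_bound3 Hg); nra | apply Rdiv_le_contravar; [lra | nra |]].
  replace ((a ^ 2 + b ^ 2 + c ^ 2) ^ 2) with ((a ^ 2 + b ^ 2 + c ^ 2) * (a ^ 2 + b ^ 2 + c ^ 2))
    by ring.
  apply Rmult_le_compat; nra.
Qed.

Section FirstTransform.

Variable k : R.
Hypothesis k_neq0 : k <> 0.

Lemma k_powers_pos : 0 < Rabs k /\ 0 < Rabs (k ^ 2) /\ 0 < Rabs (k ^ 3) /\ 0 < k ^ 2.
Proof. repeat split; try apply Rabs_pos_lt; try apply pow_nonzero; try apply pow2_gt_0; auto. Qed.

Lemma ex_slice_lam (b : R) : exists Lam : C,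
  is_RInt_gen (V := CV) (modulate_prim (fun a => g3 a b) k)
    (Rbar_locally m_infty) (Rbar_locally p_infty) Lam /\
  filterlim (fun r => RInt (V := CV) (modulate (fun a => g0 a b) k) (- r) r) (Rbar_locally p_infty)
    (locally (T := CV) (@scal _ CV (/ k ^ 2) Lam)).
Proof.
  apply modulate_lim_ibp3 with (u1 := fun a => g1 a b) (u2 := fun a => g2 a b) (M := Cst) (T := 2);
    auto; try lra.
  - intros; apply (sd_deriv1 Hg).
  - intros; apply (sd_deriv2 Hg).
  - intros; apply (sd_deriv3 Hg).
  - intros; apply jcontinuous_partial1, (sd_cont3 Hg).
  - apply (sd_C_ge0 Hg).
  - intros; apply slice_bounds_far; auto.
Qed.

(* [slice_lam b] is the improper integral left after three integrations by parts in [a]; the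
   transform in [a] is [slice_lam b / k^2]. *)
Definition slice_lam (b : R) : C := proj1_sig (constructive_indefinite_description _ (ex_slice_lam b)).

Definition slice_transform (b : R) : C := @scal _ CV (/ k ^ 2) (slice_lam b).

Lemma slice_lam_spec (b : R) :
  is_RInt_gen (V := CV) (modulate_prim (fun a => g3 a b) k)
    (Rbar_locally m_infty) (Rbar_locally p_infty) (slice_lam b) /\
  filterlim (fun r => RInt (V := CV) (modulate (fun a => g0 a b) k) (- r) r) (Rbar_locally p_infty)
    (locally (T := CV) (slice_transform b)).
Proof.
  unfold slice_transform, slice_lam.
  destruct (constructive_indefinite_description _ (ex_slice_lam b)) as [L HL]; exact HL.
Qed.

Lemma ex_RInt_modulate_prim_g3 (b x y : R) :
  ex_RInt (V := CV) (modulate_prim (fun a => g3 a b) k) x y.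
Proof.
  apply ex_RInt_C_continuous; intros; apply continuous_modulate_prim.
  apply jcontinuous_partial1, (sd_cont3 Hg).
Qed.

Lemma Cnorm_slice_transform_le (b : R) : 1 < b ^ 2 + c ^ 2 ->
  Cnorm (slice_transform b) <= transform_const Cst k / sqrt (b ^ 2 + c ^ 2) ^ 3.
Proof.
  intros Hr; pose proof (sd_C_ge0 Hg) as HC; destruct k_powers_pos as (Hk & _ & _ & Hk2).
  set (rho := sqrt (b ^ 2 + c ^ 2)).
  assert (Hrho1 : 1 < rho) by (unfold rho; rewrite <- sqrt_1; apply sqrt_lt_1_alt; lra).
  assert (Hrho2 : rho ^ 2 = b ^ 2 + c ^ 2) by (unfold rho; apply pow2_sqrt; nra).
  assert (Hs2 : 0 < sqrt 2) by (apply sqrt_lt_R0; lra).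
  assert (HL : Cnorm (slice_lam b) <= (sqrt 2 * Cst / (Rabs k * rho ^ 2)) * PI / rho).
  { rewrite <- (minus_zero_r (G := CV) (slice_lam b)).
    apply (lim_Cnorm_sub_le _ _ zero _ 0 (is_RInt_gen_symmetric _ _ (proj1 (slice_lam_spec b)))).
    intros r Hr0; rewrite (minus_zero_r (G := CV)).
    apply Cnorm_RInt_le_inv_sum_sqr; try lra; auto using ex_RInt_modulate_prim_g3.
    - apply Rdiv_le_0_compat; [nra | apply Rmult_lt_0_compat; nra].
    - intros t _; eapply Rle_trans; [apply Cnorm_modulate_prim_le; auto |].
      pose proof (slice_bound3_rho t b Hr) as Hg3; fold rho in Hg3; rewrite <- Hrho2 in Hg3.
      replace (sqrt 2 * Cst / (Rabs k * rho ^ 2) / (t ^ 2 + rho ^ 2))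
        with (sqrt 2 * ((Cst / (rho ^ 2 * (t ^ 2 + rho ^ 2))) / Rabs k))
        by (field; repeat split; try lra; nra).
      apply Rmult_le_compat_l; [lra |]; apply Rdiv_le_compat_r; auto. }
  unfold slice_transform; eapply Rle_trans; [apply Cnorm_scal_le |].
  rewrite Rabs_right by (apply Rle_ge; left; apply Rinv_0_lt_compat; lra).
  unfold transform_const; fold rho.
  replace (sqrt 2 * Cst * PI / Rabs k ^ 3 / rho ^ 3)
    with (/ k ^ 2 * ((sqrt 2 * Cst / (Rabs k * rho ^ 2)) * PI / rho))
    by (rewrite <- (pow2_abs k); field; split; lra).
  apply Rmult_le_compat_l; [left; apply Rinv_0_lt_compat; lra | exact HL].
Qed.

Definition partial_transform (s b : R) : C := RInt (V := CV) (modulate (fun a => g0 a b) k) (- s) s.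

Definition partial_lam (s b : R) : C := RInt (V := CV) (modulate_prim (fun a => g3 a b) k) (- s) s.

Definition slice_boundary (b t : R) : C :=
  ibp3_boundary (fun a => g0 a b) (fun a => g1 a b) (fun a => g2 a b) k t.

Lemma slice_transform_sub_partial (s b : R) :
  @minus CV (slice_transform b) (partial_transform s b) =
  @plus CV (@minus CV (slice_boundary b (- s)) (slice_boundary b s))
    (@scal _ CV (/ k ^ 2) (@minus CV (slice_lam b) (partial_lam s b))).
Proof.
  unfold partial_transform, partial_lam, slice_boundary, slice_transform.
  rewrite (RInt_modulate_ibp3 (fun a => g0 a b) (fun a => g1 a b) (fun a => g2 a b) (fun a => g3 a b));
    auto.
  - destruct (slice_lam b), (ibp3_boundary _ _ _ k s), (ibp3_boundary _ _ _ k (- s)),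
      (RInt (V := CV) (modulate_prim (fun a => g3 a b) k) (- s) s).
    C_unfold; f_equal; ring.
  - intros; apply (sd_deriv1 Hg).
  - intros; apply (sd_deriv2 Hg).
  - intros; apply (sd_deriv3 Hg).
  - intros; apply jcontinuous_partial1, (sd_cont3 Hg).
Qed.

Lemma Cnorm_slice_lam_sub_partial (s b : R) : 2 <= s ->
  Cnorm (@minus CV (slice_lam b) (partial_lam s b))
  <= 2 * (sqrt 2 * Cst / (Rabs k * (b ^ 2 + s ^ 2))) / s.
Proof.
  intros Hs; pose proof (sd_C_ge0 Hg) as HC; destruct k_powers_pos as (Hk & _).
  apply Cnorm_RInt_gen_sub_central; try lra; auto using ex_RInt_modulate_prim_g3.
  - apply Rdiv_le_0_compat; [apply Rmult_le_pos; [apply sqrt_pos | lra] |].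
    apply Rmult_lt_0_compat; nra.
  - apply (slice_lam_spec b).
  - intros t Ht; eapply Rle_trans; [apply Cnorm_modulate_prim_le; auto |].
    destruct (slice_bounds_beyond s t b Hs Ht) as (_ & _ & _ & H3 & _).
    assert (t <> 0) by (intro; subst; rewrite Rabs_R0 in Ht; lra).
    assert (0 < t ^ 2) by (apply pow2_gt_0; auto).
    replace (sqrt 2 * Cst / (Rabs k * (b ^ 2 + s ^ 2)) / t ^ 2)
      with (sqrt 2 * (Cst / ((b ^ 2 + s ^ 2) * t ^ 2) / Rabs k)) by (field; repeat split; nra).
    apply Rmult_le_compat_l; [apply sqrt_pos | apply Rdiv_le_compat_r; auto].
Qed.

Definition boundary_const : R := sqrt 2 * Cst * (1 / Rabs k + 1 / Rabs (k ^ 2) + 1 / Rabs (k ^ 3)).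

Lemma Cnorm_slice_boundary_le (s b t : R) : 2 <= s -> Rabs t = s ->
  Cnorm (slice_boundary b t) <= boundary_const / s.
Proof.
  intros Hs Ht; pose proof (sd_C_ge0 Hg) as HC; destruct k_powers_pos as (Hk & Hk2 & Hk3 & _).
  unfold slice_boundary; eapply Rle_trans; [apply Cnorm_ibp3_boundary_le; auto |].
  destruct (slice_bounds_beyond s t b Hs ltac:(lra)) as (H0 & H1 & H2 & _).
  assert (Cst / (b ^ 2 + s ^ 2) <= Cst / s) by (apply Rdiv_le_contravar; nra).
  unfold boundary_const.
  replace (sqrt 2 * Cst * (1 / Rabs k + 1 / Rabs (k ^ 2) + 1 / Rabs (k ^ 3)) / s)
    with (sqrt 2 * (Cst / s / Rabs k + Cst / s / Rabs (k ^ 2) + Cst / s / Rabs (k ^ 3))) by (field; lra).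
  apply Rmult_le_compat_l; [apply sqrt_pos |].
  repeat apply Rplus_le_compat; apply Rdiv_le_compat_r; auto; lra.
Qed.

Definition uniform_const : R := 2 * boundary_const + 2 * sqrt 2 * Cst / (k ^ 2 * Rabs k).

Lemma Cnorm_slice_transform_sub_partial (s b : R) : 2 <= s ->
  Cnorm (@minus CV (slice_transform b) (partial_transform s b)) <= uniform_const / s.
Proof.
  intros Hs; pose proof (sd_C_ge0 Hg) as HC; destruct k_powers_pos as (Hk & _ & _ & Hk2).
  rewrite slice_transform_sub_partial.
  eapply Rle_trans; [apply (norm_triangle (K := R_AbsRing) (V := CV)) |].
  eapply Rle_trans; [apply Rplus_le_compat; [apply Cnorm_minus_le | apply Cnorm_scal_le] |].
  pose proof (Cnorm_slice_boundary_le s b (- s) Hs ltac:(rewrite Rabs_left; lra)).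
  pose proof (Cnorm_slice_boundary_le s b s Hs ltac:(rewrite Rabs_right; lra)).
  pose proof (Cnorm_slice_lam_sub_partial s b Hs) as Htail.
  rewrite Rabs_right by (apply Rle_ge; left; apply Rinv_0_lt_compat; auto).
  assert (Hq : 2 * (sqrt 2 * Cst / (Rabs k * (b ^ 2 + s ^ 2))) / s <= 2 * (sqrt 2 * Cst / Rabs k) / s).
  { apply Rdiv_le_compat_r; [| lra]; apply Rmult_le_compat_l; [lra |].
    apply Rdiv_le_contravar; [apply Rmult_le_pos; [apply sqrt_pos | lra] | lra |].
    rewrite <- (Rmult_1_r (Rabs k)) at 1; apply Rmult_le_compat_l; nra. }
  assert (/ k ^ 2 * Cnorm (@minus CV (slice_lam b) (partial_lam s b))
          <= / k ^ 2 * (2 * (sqrt 2 * Cst / Rabs k) / s))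
    by (apply Rmult_le_compat_l; [left; apply Rinv_0_lt_compat | ]; lra).
  unfold uniform_const.
  replace ((2 * boundary_const + 2 * sqrt 2 * Cst / (k ^ 2 * Rabs k)) / s) with
    (boundary_const / s + boundary_const / s + / k ^ 2 * (2 * (sqrt 2 * Cst / Rabs k) / s))
    by (field; lra).
  lra.
Qed.

Lemma continuous_partial_transform (s b : R) : continuous (partial_transform s) b.
Proof.
  pose proof (sd_cont0 Hg) as J0; pose proof (sd_contb Hg) as Jb.
  assert (Hcos : jcontinuous (fun a _ => cos (k * a)))
    by (apply (jcontinuous_lift1 (fun a => cos (k * a))), continuous_cos_linear).
  assert (Hsin : jcontinuous (fun a _ => sin (k * a)))
    by (apply (jcontinuous_lift1 (fun a => sin (k * a))), continuous_sin_linear).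
  apply continuous_ext with (fun b' => ((RInt (fun a => g0 a b' * cos (k * a)) (- s) s,
                                         RInt (fun a => - (g0 a b' * sin (k * a))) (- s) s) : C)).
  { intros b'; symmetry; unfold partial_transform; rewrite RInt_C_pair; unfold modulate; simpl; auto.
    - apply (ex_RInt_jcontinuous (fun a b => g0 a b * cos (k * a))), jcontinuous_mult; auto.
    - apply (ex_RInt_jcontinuous (fun a b => - (g0 a b * sin (k * a)))).
      apply jcontinuous_opp, jcontinuous_mult; auto. }
  apply continuous_C_pair.
  - apply (continuous_RInt_jcontinuous (fun a b => g0 a b * cos (k * a))
      (fun a b => gb a b * cos (k * a))); try apply jcontinuous_mult; auto.
    intros a b0; auto_derive; [eexists; apply (sd_derivb Hg) |].
    match goal with |- context [Derive ?f b0] =>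
      rewrite (is_derive_unique f b0 (gb a b0) (sd_derivb Hg a b0)) end; ring.
  - apply (continuous_RInt_jcontinuous (fun a b => - (g0 a b * sin (k * a)))
      (fun a b => - (gb a b * sin (k * a)))); try apply jcontinuous_opp, jcontinuous_mult; auto.
    intros a b0; auto_derive; [eexists; apply (sd_derivb Hg) |].
    match goal with |- context [Derive ?f b0] =>
      rewrite (is_derive_unique f b0 (gb a b0) (sd_derivb Hg a b0)) end; ring.
Qed.

Section SecondTransform.

Variable l : R.
Hypothesis l_neq0 : l <> 0.

Lemma ex_RInt_partial_transform_modulated (s x y : R) :
  ex_RInt (V := CV) (fun b => Cmult (partial_transform s b) (expi (- (l * b)))) x y.
Proof.
  apply ex_RInt_C_continuous; intros; apply continuous_Cmult;
    [apply continuous_partial_transform | apply continuous_expi_linear].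
Qed.

Lemma uniform_const_ge0 : 0 <= uniform_const.
Proof.
  pose proof (sd_C_ge0 Hg); destruct k_powers_pos as (? & ? & ? & ?); pose proof (sqrt_pos 2).
  unfold uniform_const, boundary_const.
  assert (0 <= 1 / Rabs k + 1 / Rabs (k ^ 2) + 1 / Rabs (k ^ 3))
    by (repeat apply Rplus_le_le_0_compat; apply Rdiv_le_0_compat; lra).
  apply Rplus_le_le_0_compat; [apply Rmult_le_pos; [lra | apply Rmult_le_pos; [nra | lra]] |].
  apply Rdiv_le_0_compat; [nra | apply Rmult_lt_0_compat; lra].
Qed.

(* A uniform limit of the continuous integrands [partial_transform s b * e^{-ilb}]. *)
Lemma ex_RInt_slice_transform_modulated (x y : R) :
  ex_RInt (V := CV) (fun b => Cmult (slice_transform b) (expi (- (l * b)))) x y.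
Proof.
  destruct (filterlim_RInt (U := R) (V := CV)
    (fun s b => Cmult (partial_transform s b) (expi (- (l * b)))) x y
    (Rbar_locally p_infty) (Rbar_locally_filter _)
    (fun b => Cmult (slice_transform b) (expi (- (l * b))))
    (fun s => RInt (V := CV) (fun b => Cmult (partial_transform s b) (expi (- (l * b)))) x y))
    as [If [_ HI]].
  - intros s; apply RInt_correct, ex_RInt_partial_transform_modulated.
  - intros P [[eps Heps] HP]; pose proof uniform_const_ge0.
    exists (Rmax 2 (uniform_const / eps)); intros s Hs; apply HP; intros b.
    pose proof (Rmax_l 2 (uniform_const / eps)); pose proof (Rmax_r 2 (uniform_const / eps)).
    apply (norm_compat1 (K := R_AbsRing) (V := CV)); simpl.
    replace (@minus CV _ _)
      with (Cmult (@minus CV (partial_transform s b) (slice_transform b)) (expi (- (l * b))))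
      by (destruct (slice_transform b), (partial_transform s b), (expi (- (l * b)));
          C_unfold; f_equal; ring).
    rewrite Cnorm_Cmult_expi, Cnorm_minus_sym.
    eapply Rle_lt_trans; [apply Cnorm_slice_transform_sub_partial; lra |].
    apply Rlt_div_l; [lra |].
    assert (eps * (uniform_const / eps) = uniform_const) by (field; lra); nra.
  - exists If; exact HI.
Qed.

Lemma transform_const_ge0 : 0 <= transform_const Cst k.
Proof.
  pose proof (sd_C_ge0 Hg); destruct k_powers_pos as (Hk & _).
  unfold transform_const; apply Rdiv_le_0_compat; [| apply pow_lt; auto].
  apply Rmult_le_pos; [apply Rmult_le_pos; auto; apply sqrt_pos | left; apply PI_RGT_0].
Qed.

Lemma Cnorm_slice_transform_modulated_le (b : R) : 2 <= Rabs b ->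
  Cnorm (Cmult (slice_transform b) (expi (- (l * b)))) <= transform_const Cst k / b ^ 2.
Proof.
  intros Hb; rewrite Cnorm_Cmult_expi.
  assert (Hb2 : 4 <= b ^ 2) by (rewrite <- (pow2_abs b); nra).
  eapply Rle_trans; [apply Cnorm_slice_transform_le; nra |].
  apply Rdiv_le_contravar; [apply transform_const_ge0 | nra |].
  set (rho := sqrt (b ^ 2 + c ^ 2)).
  assert (Hrho : Rabs b <= rho) by (apply Rabs_le_sqrt; nra).
  assert (Rabs b ^ 2 <= rho ^ 2) by (apply pow_incr; split; [apply Rabs_pos | auto]).
  rewrite <- (pow2_abs b); replace (rho ^ 3) with (rho * rho ^ 2) by ring; nra.
Qed.

Lemma ex_slice_double_transform :
  ex_RInt_gen (V := CV) (fun b => Cmult (slice_transform b) (expi (- (l * b))))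
    (Rbar_locally m_infty) (Rbar_locally p_infty).
Proof.
  apply (ex_RInt_gen_inv_sqr_decay _ (transform_const Cst k) 2); try lra;
    auto using ex_RInt_slice_transform_modulated, transform_const_ge0.
  intros; apply Cnorm_slice_transform_modulated_le; auto.
Qed.

Definition boundary_rest (b t : R) : C :=
  (g1 t b * cos (k * t) / k ^ 2 - g2 t b * sin (k * t) / k ^ 3,
   - (g1 t b * sin (k * t) / k ^ 2) - g2 t b * cos (k * t) / k ^ 3).

Lemma slice_boundary_split (b t : R) :
  slice_boundary b t = @plus CV (modulate_prim (fun a => g0 a b) k t) (boundary_rest b t).
Proof. unfold slice_boundary, ibp3_boundary, modulate_prim, boundary_rest; C_unfold; f_equal; field; auto. Qed.

Lemma continuous_mult_const2 (u : R -> R) (c1 c2 b : R) :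
  continuous u b -> continuous (fun x => u x * c1 * c2) b.
Proof.
  intros Hu; apply continuous_mult_R; [apply continuous_mult_R; [exact Hu |] |];
    apply continuous_const.
Qed.

Lemma continuous_slice_modulate_prim (t b : R) :
  continuous (fun b' => modulate_prim (fun a => g0 a b') k t) b.
Proof.
  pose proof (jcontinuous_partial2 g0 t b (sd_cont0 Hg)).
  unfold modulate_prim, Rdiv; apply continuous_C_pair; apply continuous_mult_const2; auto.
Qed.

Lemma continuous_boundary_rest (t b : R) : continuous (fun b' => boundary_rest b' t) b.
Proof.
  pose proof (jcontinuous_partial2 g1 t b (sd_cont1 Hg)).
  pose proof (jcontinuous_partial2 g2 t b (sd_cont2 Hg)).
  unfold boundary_rest, Rdiv; apply continuous_C_pair.
  - apply (continuous_minus (V := R_NormedModule)); apply continuous_mult_const2; auto.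
  - apply (continuous_minus (V := R_NormedModule)); [apply (continuous_opp (V := R_NormedModule)) |];
      apply continuous_mult_const2; auto.
Qed.

Lemma Cnorm_boundary_rest_le (s b t : R) : 2 <= s -> Rabs t = s ->
  Cnorm (boundary_rest b t) <= sqrt 2 * (Cst / Rabs (k ^ 2) + Cst / Rabs (k ^ 3)) / (b ^ 2 + s ^ 2).
Proof.
  intros Hs Ht; pose proof (sd_C_ge0 Hg); destruct k_powers_pos as (_ & Hk2 & Hk3 & _).
  assert (k ^ 2 <> 0 /\ k ^ 3 <> 0) as [Hk2' Hk3'] by (split; apply pow_nonzero; auto).
  destruct (slice_bounds_beyond s t b Hs ltac:(lra)) as (_ & G1 & G2 & _).
  assert (Hbs : 0 < b ^ 2 + s ^ 2) by nra.
  replace (sqrt 2 * (Cst / Rabs (k ^ 2) + Cst / Rabs (k ^ 3)) / (b ^ 2 + s ^ 2)) with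
    (sqrt 2 * (Cst / (b ^ 2 + s ^ 2) / Rabs (k ^ 2) + Cst / (b ^ 2 + s ^ 2) / Rabs (k ^ 3)))
    by (field; lra).
  assert (Rabs (g1 t b) / Rabs (k ^ 2) <= Cst / (b ^ 2 + s ^ 2) / Rabs (k ^ 2))
    by (apply Rdiv_le_compat_r; lra).
  assert (Rabs (g2 t b) / Rabs (k ^ 3) <= Cst / (b ^ 2 + s ^ 2) / Rabs (k ^ 3))
    by (apply Rdiv_le_compat_r; lra).
  unfold boundary_rest; apply Cnorm_le_components; cbn [fst snd]; unfold Rminus;
    eapply Rle_trans; try apply Rabs_triang; rewrite ?Rabs_Ropp.
  - pose proof (Rabs_mult_trig_div (g1 t b) _ (k ^ 2) (Rabs_cos_le_1 (k * t)) Hk2').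
    pose proof (Rabs_mult_trig_div (g2 t b) _ (k ^ 3) (Rabs_sin_le_1 (k * t)) Hk3'); lra.
  - pose proof (Rabs_mult_trig_div (g1 t b) _ (k ^ 2) (Rabs_sin_le_1 (k * t)) Hk2').
    pose proof (Rabs_mult_trig_div (g2 t b) _ (k ^ 3) (Rabs_cos_le_1 (k * t)) Hk3'); lra.
Qed.

Definition osc_const : R := 2 * sqrt 2 * Cst / Rabs l + sqrt 2 * Cst * PI / Rabs l.

(* On a line [a = t] with [|t| = s] the slice is only [O(1/s)], so one integration by parts in
   [b] is needed to get a bound uniform in [r]. *)
Lemma Cnorm_RInt_modulate_line_le (s t r : R) : 2 <= s -> Rabs t = s -> 0 <= r ->
  Cnorm (RInt (V := CV) (modulate (fun b => g0 t b) l) (- r) r) <= osc_const / s.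
Proof.
  intros Hs Ht Hr; pose proof (sd_C_ge0 Hg) as HC.
  assert (Hl : 0 < Rabs l) by (apply Rabs_pos_lt; auto).
  assert (Hd : forall b, is_derive (fun b' => g0 t b') b (gb t b)) by (intros; apply (sd_derivb Hg)).
  assert (Hcd : forall b, continuous (fun b' => gb t b') b)
    by (intros; apply jcontinuous_partial2, (sd_contb Hg)).
  assert (Hex : ex_RInt (V := CV) (modulate_prim (fun b => gb t b) l) (- r) r)
    by (apply ex_RInt_C_continuous; intros; apply continuous_modulate_prim; auto).
  assert (E : RInt (V := CV) (modulate (fun b => g0 t b) l) (- r) r =
    @minus CV (@minus CV (modulate_prim (fun b => g0 t b) l r) (modulate_prim (fun b => g0 t b) l (- r)))
      (RInt (V := CV) (modulate_prim (fun b => gb t b) l) (- r) r)).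
  { apply is_RInt_unique; eapply (is_RInt_ext (V := CV)).
    2: { apply (is_RInt_minus (V := CV)); [apply is_RInt_modulate_ibp1; auto |].
         apply RInt_correct; auto. }
    intros x _; simpl; destruct (modulate (fun b => g0 t b) l x), (modulate_prim (fun b => gb t b) l x).
    C_unfold; f_equal; ring. }
  rewrite E; eapply Rle_trans; [apply Cnorm_minus_le |].
  eapply Rle_trans; [apply Rplus_le_compat_r, Cnorm_minus_le |].
  assert (Hb0 : forall b, Cnorm (modulate_prim (fun b => g0 t b) l b) <= sqrt 2 * (Cst / s / Rabs l)).
  { intros b; eapply Rle_trans; [apply Cnorm_modulate_prim_le; auto |].
    apply Rmult_le_compat_l; [apply sqrt_pos | apply Rdiv_le_compat_r; auto].
    apply (slice_bounds_beyond s t b Hs ltac:(lra)). }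
  assert (Hint : Cnorm (RInt (V := CV) (modulate_prim (fun b => gb t b) l) (- r) r)
                 <= (sqrt 2 * Cst / Rabs l) * PI / s).
  { apply Cnorm_RInt_le_inv_sum_sqr; auto; try lra.
    - apply Rdiv_le_0_compat; auto; apply Rmult_le_pos; auto; apply sqrt_pos.
    - intros b _; eapply Rle_trans; [apply Cnorm_modulate_prim_le; auto |].
      destruct (slice_bounds_beyond s t b Hs ltac:(lra)) as (_ & _ & _ & _ & Hgb).
      replace (sqrt 2 * Cst / Rabs l / (b ^ 2 + s ^ 2))
        with (sqrt 2 * (Cst / (b ^ 2 + s ^ 2) / Rabs l)) by (field; split; nra).
      apply Rmult_le_compat_l; [apply sqrt_pos | apply Rdiv_le_compat_r; auto]. }
  pose proof (Hb0 r); pose proof (Hb0 (- r)).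
  unfold osc_const.
  replace ((2 * sqrt 2 * Cst / Rabs l + sqrt 2 * Cst * PI / Rabs l) / s) with
    (sqrt 2 * (Cst / s / Rabs l) + sqrt 2 * (Cst / s / Rabs l) + sqrt 2 * Cst / Rabs l * PI / s)
    by (field; lra).
  lra.
Qed.

(* In [b] the leading boundary term is the constant [(i/k) e^{-ikt}] times the slice along the line
   [a = t]. *)
Lemma Cnorm_RInt_slice_modulate_prim_le (s t r : R) : 2 <= s -> Rabs t = s -> 0 <= r ->
  Cnorm (RInt (V := CV) (fun b => Cmult (modulate_prim (fun a => g0 a b) k t) (expi (- (l * b))))
    (- r) r) <= sqrt 2 / Rabs k * osc_const / s.
Proof.
  intros Hs Ht Hr; destruct k_powers_pos as (Hk & _).
  set (e := ((sin (k * t) / k, cos (k * t) / k) : C)).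
  rewrite (RInt_ext (V := CV) _ (fun b => Cmult e (modulate (fun b => g0 t b) l b)))
    by (intros; rewrite modulate_expi; unfold e, modulate_prim;
        destruct (expi _); unfold Cmult, RtoC; simpl; f_equal; field; auto).
  rewrite RInt_Cmult_l, Cnorm_Cmult
    by (apply ex_RInt_C_continuous; intros; apply continuous_modulate;
        apply jcontinuous_partial2, (sd_cont0 Hg)).
  replace (sqrt 2 / Rabs k * osc_const / s) with (sqrt 2 * (1 / Rabs k) * (osc_const / s))
    by (field; lra).
  apply Rmult_le_compat; try apply norm_ge_0.
  - apply Cnorm_le_components; unfold e; simpl; unfold Rdiv; rewrite Rabs_mult, Rabs_inv;
      apply Rmult_le_compat_r; auto using Rabs_sin_le_1, Rabs_cos_le_1;
      left; apply Rinv_0_lt_compat; lra.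
  - apply Cnorm_RInt_modulate_line_le; auto.
Qed.

Definition boundary_mod_const : R :=
  sqrt 2 / Rabs k * osc_const + sqrt 2 * (Cst / Rabs (k ^ 2) + Cst / Rabs (k ^ 3)) * PI.

Lemma Cnorm_RInt_slice_boundary_modulated_le (s t r : R) : 2 <= s -> Rabs t = s -> 0 <= r ->
  Cnorm (RInt (V := CV) (fun b => Cmult (slice_boundary b t) (expi (- (l * b)))) (- r) r)
  <= boundary_mod_const / s.
Proof.
  intros Hs Ht Hr; pose proof (sd_C_ge0 Hg); destruct k_powers_pos as (Hk & Hk2 & Hk3 & _).
  assert (Hex : forall h : R -> C, (forall b, continuous h b) ->
            ex_RInt (V := CV) (fun b => Cmult (h b) (expi (- (l * b)))) (- r) r)
    by (intros; apply ex_RInt_C_continuous; intros; apply continuous_Cmult;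
        auto using continuous_expi_linear).
  assert (Hex1 : ex_RInt (V := CV)
    (fun b => Cmult (modulate_prim (fun a => g0 a b) k t) (expi (- (l * b)))) (- r) r)
    by (apply Hex; intros; apply continuous_slice_modulate_prim).
  assert (Hex2 : ex_RInt (V := CV) (fun b => Cmult (boundary_rest b t) (expi (- (l * b)))) (- r) r)
    by (apply Hex; intros; apply continuous_boundary_rest).
  rewrite (RInt_ext (V := CV) _ (fun b => @plus CV
    (Cmult (modulate_prim (fun a => g0 a b) k t) (expi (- (l * b))))
    (Cmult (boundary_rest b t) (expi (- (l * b))))))
    by (intros; rewrite slice_boundary_split; destruct (modulate_prim _ k t), (boundary_rest _ t),
          (expi _); C_unfold; f_equal; ring).
  rewrite (RInt_plus (V := CV)) by assumption.
  eapply Rle_trans; [apply (norm_triangle (K := R_AbsRing) (V := CV)) |].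
  unfold boundary_mod_const; rewrite Rdiv_plus_distr; apply Rplus_le_compat.
  - apply Cnorm_RInt_slice_modulate_prim_le; auto.
  - apply Cnorm_RInt_le_inv_sum_sqr; try lra; auto.
    + apply Rmult_le_pos; [apply sqrt_pos |].
      apply Rplus_le_le_0_compat; apply Rdiv_le_0_compat; lra.
    + intros b _; rewrite Cnorm_Cmult_expi; apply Cnorm_boundary_rest_le; auto.
Qed.

Lemma continuous_slice_boundary (t b : R) : continuous (fun b' => slice_boundary b' t) b.
Proof.
  eapply continuous_ext; [intros; symmetry; apply slice_boundary_split |].
  apply (continuous_plus (V := CV));
    [apply continuous_slice_modulate_prim | apply continuous_boundary_rest].
Qed.

Definition lam_tail_modulated (s b : R) : C :=
  Cmult (@scal _ CV (/ k ^ 2) (@minus CV (slice_lam b) (partial_lam s b))) (expi (- (l * b))).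

Definition boundary_modulated (s b : R) : C :=
  Cmult (@minus CV (slice_boundary b (- s)) (slice_boundary b s)) (expi (- (l * b))).

Lemma transform_sub_partial_modulated (s b : R) :
  Cmult (@minus CV (slice_transform b) (partial_transform s b)) (expi (- (l * b)))
  = @plus CV (boundary_modulated s b) (lam_tail_modulated s b).
Proof.
  unfold boundary_modulated, lam_tail_modulated; rewrite slice_transform_sub_partial.
  destruct (slice_boundary b (- s)), (slice_boundary b s), (slice_lam b), (partial_lam s b),
    (expi (- (l * b))); C_unfold; f_equal; ring.
Qed.

Lemma ex_RInt_boundary_modulated (s x y : R) : ex_RInt (V := CV) (boundary_modulated s) x y.
Proof.
  apply ex_RInt_C_continuous; intros; apply continuous_Cmult; [| apply continuous_expi_linear].
  apply (continuous_minus (V := CV)); apply continuous_slice_boundary.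
Qed.

Lemma ex_RInt_transform_sub_partial_modulated (s x y : R) :
  ex_RInt (V := CV)
    (fun b => Cmult (@minus CV (slice_transform b) (partial_transform s b)) (expi (- (l * b)))) x y.
Proof.
  eapply (ex_RInt_ext (V := CV)); [| apply (ex_RInt_minus (V := CV));
    [apply ex_RInt_slice_transform_modulated | apply (ex_RInt_partial_transform_modulated s)]].
  intros b _; simpl; destruct (slice_transform b), (partial_transform s b), (expi (- (l * b)));
    C_unfold; f_equal; ring.
Qed.

Lemma ex_RInt_lam_tail_modulated (s x y : R) : ex_RInt (V := CV) (lam_tail_modulated s) x y.
Proof.
  eapply (ex_RInt_ext (V := CV)); [| apply (ex_RInt_minus (V := CV));
    [apply (ex_RInt_transform_sub_partial_modulated s) | apply (ex_RInt_boundary_modulated s)]].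
  intros b _; simpl; rewrite transform_sub_partial_modulated.
  destruct (boundary_modulated s b), (lam_tail_modulated s b); C_unfold; f_equal; ring.
Qed.

Definition tail_const : R := 2 * sqrt 2 * Cst * PI / (k ^ 2 * Rabs k).

Lemma Cnorm_RInt_lam_tail_modulated_le (s r : R) : 2 <= s -> 0 <= r ->
  Cnorm (RInt (V := CV) (lam_tail_modulated s) (- r) r) <= tail_const / s.
Proof.
  intros Hs Hr; pose proof (sd_C_ge0 Hg); destruct k_powers_pos as (Hk & _ & _ & Hk2).
  assert (Hkk : 0 < k ^ 2 * Rabs k) by (apply Rmult_lt_0_compat; lra).
  pose proof (sqrt_pos 2); pose proof PI_RGT_0.
  eapply Rle_trans.
  - apply (Cnorm_RInt_le_inv_sum_sqr _ (2 * sqrt 2 * Cst / (k ^ 2 * Rabs k) / s) s);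
      auto using ex_RInt_lam_tail_modulated; try lra.
    + apply Rdiv_le_0_compat; [apply Rdiv_le_0_compat; [nra | lra] | lra].
    + intros b _; unfold lam_tail_modulated; rewrite Cnorm_Cmult_expi.
      eapply Rle_trans; [apply Cnorm_scal_le |].
      rewrite Rabs_right by (apply Rle_ge; left; apply Rinv_0_lt_compat; auto).
      eapply Rle_trans; [apply Rmult_le_compat_l; [left; apply Rinv_0_lt_compat; auto |];
        apply Cnorm_slice_lam_sub_partial; auto |].
      assert (0 < b ^ 2 + s ^ 2) by nra.
      right; field; repeat split; lra.
  - unfold tail_const.
    replace (2 * sqrt 2 * Cst / (k ^ 2 * Rabs k) / s * PI / s)
      with (2 * sqrt 2 * Cst * PI / (k ^ 2 * Rabs k) / s * (1 / s)) by (field; lra).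
    rewrite <- (Rmult_1_r (2 * sqrt 2 * Cst * PI / (k ^ 2 * Rabs k) / s)) at 2.
    apply Rmult_le_compat_l; [| apply Rle_div_l; lra].
    assert (0 <= 2 * sqrt 2 * Cst * PI)
      by (apply Rmult_le_pos; [apply Rmult_le_pos |]; lra).
    apply Rdiv_le_0_compat; [apply Rdiv_le_0_compat |]; lra.
Qed.

Definition double_const : R := 2 * boundary_mod_const + tail_const.

Lemma Cnorm_RInt_transform_sub_partial_modulated (s r : R) : 2 <= s -> 0 <= r ->
  Cnorm (@minus CV
    (RInt (V := CV) (fun b => Cmult (slice_transform b) (expi (- (l * b)))) (- r) r)
    (RInt (V := CV) (fun b => Cmult (partial_transform s b) (expi (- (l * b)))) (- r) r))
  <= double_const / s.
Proof.
  intros Hs Hr.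
  rewrite <- (RInt_minus (V := CV))
    by auto using ex_RInt_slice_transform_modulated, ex_RInt_partial_transform_modulated.
  rewrite (RInt_ext (V := CV) _ (fun b => @plus CV (boundary_modulated s b) (lam_tail_modulated s b)))
    by (intros; rewrite <- transform_sub_partial_modulated;
        destruct (slice_transform x), (partial_transform s x), (expi (- (l * x)));
        C_unfold; f_equal; ring).
  rewrite (RInt_plus (V := CV)) by auto using ex_RInt_boundary_modulated, ex_RInt_lam_tail_modulated.
  unfold boundary_modulated at 1.
  rewrite (RInt_ext (V := CV) _ (fun b => @minus CV
    (Cmult (slice_boundary b (- s)) (expi (- (l * b))))
    (Cmult (slice_boundary b s) (expi (- (l * b))))))
    by (intros; destruct (slice_boundary x (- s)), (slice_boundary x s), (expi (- (l * x)));
        C_unfold; f_equal; ring).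
  rewrite (RInt_minus (V := CV))
    by (apply ex_RInt_C_continuous; intros; apply continuous_Cmult;
        auto using continuous_slice_boundary, continuous_expi_linear).
  pose proof (Cnorm_RInt_slice_boundary_modulated_le s (- s) r Hs ltac:(rewrite Rabs_left; lra) Hr).
  pose proof (Cnorm_RInt_slice_boundary_modulated_le s s r Hs ltac:(rewrite Rabs_right; lra) Hr).
  pose proof (Cnorm_RInt_lam_tail_modulated_le s r Hs Hr).
  eapply Rle_trans; [apply (norm_triangle (K := R_AbsRing) (V := CV)) |].
  eapply Rle_trans; [apply Rplus_le_compat_r, Cnorm_minus_le |].
  unfold double_const; replace ((2 * boundary_mod_const + tail_const) / s)
    with (boundary_mod_const / s + boundary_mod_const / s + tail_const / s) by (field; lra).
  lra.
Qed.

Lemma double_lim_partial_transform (F : C) :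
  is_RInt_gen (V := CV) (fun b => Cmult (slice_transform b) (expi (- (l * b))))
    (Rbar_locally m_infty) (Rbar_locally p_infty) F ->
  filterlim (fun rs : R * R =>
      RInt (V := CV) (fun b => Cmult (partial_transform (snd rs) b) (expi (- (l * b)))) (- fst rs) (fst rs))
    (filter_prod (Rbar_locally p_infty) (Rbar_locally p_infty)) (locally (T := CV) F).
Proof.
  intros HF; apply (filterlim_locally_ball_norm (K := R_AbsRing) (U := CV)); intros [eps Heps].
  destruct (proj1 (filterlim_locally_ball_norm (K := R_AbsRing) (U := CV) _ F)
    (is_RInt_gen_symmetric _ _ HF) (mkposreal (eps / 2) ltac:(lra))) as [R1 HR1].
  apply (Filter_prod _ _ _ (fun r => Rmax R1 0 < r)
    (fun s => Rmax 2 (2 * Rabs double_const / eps) < s)); [eexists; eauto | eexists; eauto |].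
  intros r s Hr Hs; unfold ball_norm; simpl.
  pose proof (Rmax_l R1 0); pose proof (Rmax_r R1 0).
  pose proof (Rmax_l 2 (2 * Rabs double_const / eps)); pose proof (Rmax_r 2 (2 * Rabs double_const / eps)).
  pose proof (Cnorm_RInt_transform_sub_partial_modulated s r ltac:(lra) ltac:(lra)) as B1.
  pose proof (HR1 r ltac:(lra)) as B2; unfold ball_norm in B2; simpl in B2.
  rewrite Cnorm_minus_sym in B1.
  eapply Rle_lt_trans;
    [apply (Cnorm_minus_triangle _ (RInt (V := CV) (fun b => Cmult (slice_transform b) (expi (- (l * b)))) (- r) r)) |].
  assert (double_const / s < eps / 2).
  { apply Rlt_div_l; [lra |].
    assert (eps * (2 * Rabs double_const / eps) = 2 * Rabs double_const) by (field; lra).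
    pose proof (Rle_abs double_const); nra. }
  apply Rle_lt_trans with (double_const / s + eps / 2); [| lra].
  apply Rplus_le_compat; [exact B1 | left; exact B2].
Qed.

Lemma Cnorm_slice_double_transform_le (F : C) :
  is_RInt_gen (V := CV) (fun b => Cmult (slice_transform b) (expi (- (l * b))))
    (Rbar_locally m_infty) (Rbar_locally p_infty) F ->
  1 < Rabs c -> Cnorm F <= transform_const Cst k * PI / c ^ 2.
Proof.
  intros HF Hc; pose proof transform_const_ge0 as HK.
  assert (Hc2 : 1 < c ^ 2) by (rewrite <- (pow2_abs c); nra).
  rewrite <- (minus_zero_r (G := CV) F).
  apply (lim_Cnorm_sub_le _ _ zero _ 0 (is_RInt_gen_symmetric _ _ HF)).
  intros r Hr; rewrite (minus_zero_r (G := CV)).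
  replace (transform_const Cst k * PI / c ^ 2)
    with ((transform_const Cst k / Rabs c) * PI / Rabs c) by (rewrite <- (pow2_abs c); field; lra).
  apply Cnorm_RInt_le_inv_sum_sqr; try lra; auto using ex_RInt_slice_transform_modulated.
  - apply Rdiv_le_0_compat; lra.
  - intros b _; rewrite Cnorm_Cmult_expi.
    eapply Rle_trans; [apply Cnorm_slice_transform_le; nra |].
    rewrite pow2_abs; set (rho := sqrt (b ^ 2 + c ^ 2)).
    assert (Hrho : Rabs c <= rho) by (apply Rabs_le_sqrt; nra).
    assert (Hrho2 : rho ^ 2 = b ^ 2 + c ^ 2) by (apply pow2_sqrt; nra).
    assert (0 < b ^ 2 + c ^ 2) by nra.
    replace (transform_const Cst k / Rabs c / (b ^ 2 + c ^ 2))
      with (transform_const Cst k / (Rabs c * (b ^ 2 + c ^ 2))) by (field; split; lra).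
    apply Rdiv_le_contravar; auto; [apply Rmult_lt_0_compat; lra |].
    replace (rho ^ 3) with (rho * rho ^ 2) by ring; rewrite Hrho2.
    apply Rmult_le_compat_r; lra.
Qed.

End SecondTransform.
End FirstTransform.
End SliceTransform.

Theorem slice_fourier (g0 g1 g2 g3 gb : R -> R -> R) (c Cst k l : R) :
  slice_decay g0 g1 g2 g3 gb c Cst -> k <> 0 -> l <> 0 ->
  exists (A : R -> C) (F : C),
    (forall b, ft_lim1 (fun a => g0 a b) k (A b)) /\
    (forall b, 1 < b ^ 2 + c ^ 2 -> Cmod (A b) <= transform_const Cst k / sqrt (b ^ 2 + c ^ 2) ^ 3) /\
    ft_lim2 g0 k l F /\ ft_int A l F /\
    (1 < Rabs c -> Cmod F <= transform_const Cst k * PI / c ^ 2).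
Proof.
  intros Hg Hk Hl.
  destruct (ex_slice_double_transform _ _ _ _ _ _ _ Hg k Hk l) as [F HF].
  exists (slice_transform _ _ _ _ _ _ _ Hg k Hk), F; repeat split.
  - intros b; unfold ft_lim1.
    eapply filterlim_ext; [| apply (slice_lam_spec _ _ _ _ _ _ _ Hg k Hk b)].
    intros r; apply (RInt_ext (V := CV)); intros; apply (modulate_expi (fun a => g0 a b)).
  - intros b Hb; rewrite <- Cnorm_Cmod; apply Cnorm_slice_transform_le; auto.
  - unfold ft_lim2; eapply filterlim_ext; [| apply (double_lim_partial_transform _ _ _ _ _ _ _ Hg k Hk l Hl F HF)].
    intros [r s]; simpl; apply (RInt_ext (V := CV)); intros b _.
    unfold partial_transform; rewrite <- RInt_Cmult_r.
    + apply (RInt_ext (V := CV)); intros; rewrite modulate_expi; reflexivity.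
    + apply ex_RInt_C_continuous; intros; apply continuous_modulate, jcontinuous_partial1, (sd_cont0 Hg).
  - exact HF.
  - intros Hc; rewrite <- Cnorm_Cmod; apply (Cnorm_slice_double_transform_le _ _ _ _ _ _ _ Hg k Hk l F HF Hc).
Qed.

(** * Transforms of a smooth function on [R^3] *)

(* The transforms of the statement; [iota] picks the limit whenever it exists. *)
Definition ft1 (u : R -> R) (k : R) : C := iota (fun L : CV => ft_lim1 u k L).

Definition ft2 (g : R -> R -> R) (k l : R) : C := iota (fun L : CV => ft_lim2 g k l L).

Lemma ft1_eq (u : R -> R) (k : R) (L : C) : ft_lim1 u k L -> ft1 u k = L.
Proof. apply (iota_filterlim_locally (K := R_AbsRing) (V := CV)). Qed.

Lemma ft2_eq (g : R -> R -> R) (k l : R) (L : C) : ft_lim2 g k l L -> ft2 g k l = L.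
Proof. apply (iota_filterlim_locally (K := R_AbsRing) (V := CV)). Qed.

Lemma slice_fourier_ft (g0 g1 g2 g3 gb : R -> R -> R) (c Cst k l : R) :
  slice_decay g0 g1 g2 g3 gb c Cst -> k <> 0 -> l <> 0 ->
  (forall b, ft_lim1 (fun a => g0 a b) k (ft1 (fun a => g0 a b) k)) /\
  (forall b, 1 < b ^ 2 + c ^ 2 ->
     Cmod (ft1 (fun a => g0 a b) k) <= transform_const Cst k / sqrt (b ^ 2 + c ^ 2) ^ 3) /\
  ft_lim2 g0 k l (ft2 g0 k l) /\ ft_int (fun b => ft1 (fun a => g0 a b) k) l (ft2 g0 k l) /\
  (1 < Rabs c -> Cmod (ft2 g0 k l) <= transform_const Cst k * PI / c ^ 2).
Proof.
  intros Hg Hk Hl.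
  destruct (slice_fourier g0 g1 g2 g3 gb c Cst k l Hg Hk Hl) as (A & F & HA & HAb & HF & HAF & HFb).
  assert (EA : forall b, ft1 (fun a => g0 a b) k = A b) by (intros; apply ft1_eq, HA).
  replace (fun b => ft1 (fun a => g0 a b) k) with A
    by (apply functional_extensionality; intros; symmetry; apply EA).
  rewrite (ft2_eq g0 k l F HF); repeat split; intros; rewrite ?EA; auto.
Qed.

Lemma filterlim_prod_swap (P : R * R -> C) (L : C) :
  filterlim P (filter_prod (Rbar_locally p_infty) (Rbar_locally p_infty)) (locally (T := CV) L) ->
  filterlim (fun rs => P (snd rs, fst rs))
    (filter_prod (Rbar_locally p_infty) (Rbar_locally p_infty)) (locally (T := CV) L).
Proof.
  intros H Q HQ; destruct (H Q HQ) as [A B HA HB HAB].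
  apply (Filter_prod _ _ _ B A HB HA); intros x y Hx Hy; apply HAB; auto.
Qed.

(* By Fubini on rectangles, the double integral in the other order is the same function of the
   swapped pair of radii. *)
Lemma ft_lim2_swap (g g1 gb : R -> R -> R) (k l : R) (L : C) :
  (forall a b, is_derive (fun a' => g a' b) a (g1 a b)) ->
  (forall a b, is_derive (fun b' => g a b') b (gb a b)) ->
  jcontinuous g -> jcontinuous g1 -> jcontinuous gb ->
  ft_lim2 g k l L -> ft_lim2 (fun a b => g b a) l k L.
Proof.
  intros Da Db Jg Jg1 Jgb HL; unfold ft_lim2.
  eapply filterlim_ext; [| apply filterlim_prod_swap, HL]; intros [r s]; simpl.
  rewrite (RInt_RInt_swap_modulated g g1 gb k l Da Db Jg Jg1 Jgb).
  apply (RInt_ext (V := CV)); intros a _; apply (RInt_ext (V := CV)); intros b _.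
  destruct (expi (- (k * a))), (expi (- (l * b))); unfold Cmult, RtoC; simpl; f_equal; ring.
Qed.

Set Implicit Arguments.
Record pair_fourier (g : R -> R -> R) (k l c Kk Kl : R) : Prop := {
  pf_lim_first : forall b, ft_lim1 (fun a => g a b) k (ft1 (fun a => g a b) k);
  pf_lim_second : forall a, ft_lim1 (fun b => g a b) l (ft1 (fun b => g a b) l);
  pf_decay_first : forall b, 1 < b ^ 2 + c ^ 2 ->
    Cmod (ft1 (fun a => g a b) k) <= Kk / sqrt (b ^ 2 + c ^ 2) ^ 3;
  pf_decay_second : forall a, 1 < a ^ 2 + c ^ 2 ->
    Cmod (ft1 (fun b => g a b) l) <= Kl / sqrt (a ^ 2 + c ^ 2) ^ 3;
  pf_lim_double : ft_lim2 g k l (ft2 g k l);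
  pf_int_first : ft_int (fun b => ft1 (fun a => g a b) k) l (ft2 g k l);
  pf_int_second : ft_int (fun a => ft1 (fun b => g a b) l) k (ft2 g k l);
  pf_decay_double : 1 < Rabs c -> Cmod (ft2 g k l) <= Kk * PI / c ^ 2 }.
Unset Implicit Arguments.

Lemma pair_fourier_of_slices (g g1 g2 g3 gb h1 h2 h3 hb : R -> R -> R) (c Cst k l : R) :
  slice_decay g g1 g2 g3 gb c Cst -> slice_decay (fun a b => g b a) h1 h2 h3 hb c Cst ->
  k <> 0 -> l <> 0 ->
  pair_fourier g k l c (transform_const Cst k) (transform_const Cst l).
Proof.
  intros Hg Hh Hk Hl.
  destruct (slice_fourier_ft _ _ _ _ _ _ _ k l Hg Hk Hl) as (HA & HAb & HF & HAF & HFb).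
  destruct (slice_fourier_ft _ _ _ _ _ _ _ l k Hh Hl Hk) as (HB & HBb & HF' & HBF & _).
  assert (Hswap : ft2 (fun a b => g b a) l k = ft2 g k l).
  { apply ft2_eq, (ft_lim2_swap g g1 gb); auto;
      [apply (sd_deriv1 Hg) | apply (sd_derivb Hg) | apply (sd_cont0 Hg) | apply (sd_cont1 Hg)
      | apply (sd_contb Hg)]. }
  rewrite Hswap in HBF; constructor; auto.
Qed.

Definition decay_bounds3 (f : R -> R -> R -> R) (Cst : R) : Prop :=
  0 <= Cst /\ forall x y z, 1 < norm3 x y z ->
    Rabs (f x y z) <= Cst / norm3 x y z /\
    forall d, Rabs (iter_pd3 (d :: nil) f x y z) <= Cst / norm3 x y z ^ 2 /\
              Rabs (iter_pd3 (d :: d :: nil) f x y z) <= Cst / norm3 x y z ^ 3 /\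
              Rabs (iter_pd3 (d :: d :: d :: nil) f x y z) <= Cst / norm3 x y z ^ 4.

Lemma moderate_decrease3_n_common (hs : list ((R -> R -> R -> R) * nat)) :
  (forall p, In p hs -> moderate_decrease3_n (snd p) (fst p)) ->
  exists Cst, 0 <= Cst /\ forall p, In p hs -> forall x y z, 1 < norm3 x y z ->
    Rabs (fst p x y z) <= Cst / norm3 x y z ^ snd p.
Proof.
  induction hs as [| [h n] hs IH]; intros Hhs.
  - exists 0; split; [lra | intros p []].
  - destruct (Hhs (h, n) (or_introl eq_refl)) as [C0 H0].
    destruct IH as [C1 [HC1 H1]]; [intros; apply Hhs; right; auto |].
    exists (Rabs C0 + C1); split; [pose proof (Rabs_pos C0); lra |].
    intros p Hp x y z Hn; assert (0 < norm3 x y z ^ snd p) by (apply pow_lt; lra).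
    destruct Hp as [<- | Hp].
    + eapply Rle_trans; [apply H0, Hn | apply Rdiv_le_compat_r; auto].
      pose proof (Rle_abs C0); lra.
    + eapply Rle_trans; [apply H1; auto | apply Rdiv_le_compat_r; auto].
      pose proof (Rabs_pos C0); lra.
Qed.

Lemma iter_pd3_repeat (d : dir3) (m : nat) (f : R -> R -> R -> R) :
  iter_pd3 (repeat d m) f = Nat.iter m (pd3 d) f.
Proof. induction m as [| m IH]; simpl; [reflexivity | now rewrite IH]. Qed.

Lemma pure_derivative_decay (f : R -> R -> R -> R) (d : dir3) (m : nat) :
  cond_v3 f -> (1 <= m)%nat -> moderate_decrease3_n (S m) (iter_pd3 (repeat d m) f).
Proof.
  intros Hv Hm; rewrite iter_pd3_repeat.
  destruct d; [specialize (Hv m 0 0)%nat | specialize (Hv 0 m 0)%nat | specialize (Hv 0 0 m)%nat];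
    rewrite ?Nat.add_0_r, ?Nat.add_1_r in Hv; apply Hv; lia.
Qed.

(* [Defs.Dx] is qualified because Reals also exports a lemma named [Dx]. *)
Lemma ex_decay_bounds3 (f : R -> R -> R -> R) :
  very_moderate_decrease3 f -> cond_v3 f -> exists Cst, decay_bounds3 f Cst.
Proof.
  intros [C0 H0] Hv.
  destruct (moderate_decrease3_n_common ((f, 1%nat) :: flat_map (fun d =>
    (iter_pd3 (repeat d 1) f, 2%nat) :: (iter_pd3 (repeat d 2) f, 3%nat)
    :: (iter_pd3 (repeat d 3) f, 4%nat) :: nil) (Defs.Dx :: Defs.Dy :: Defs.Dz :: nil))) as [Cst [HC HB]].
  - intros p [<- | Hp].
    + exists C0; intros x y z Hn; simpl; rewrite Rmult_1_r; apply H0, Hn.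
    + apply in_flat_map in Hp as [d [_ Hp]].
      cbn [In] in Hp; destruct Hp as [<- | [<- | [<- | []]]]; apply pure_derivative_decay; auto.
  - exists Cst; split; [exact HC |]; intros x y z Hn; split.
    + rewrite <- (pow_1 (norm3 x y z)); apply (HB (f, 1%nat)); auto; left; reflexivity.
    + intros d; assert (Hd : forall m, In (iter_pd3 (repeat d m) f, S m)
          (flat_map (fun d => (iter_pd3 (repeat d 1) f, 2%nat) :: (iter_pd3 (repeat d 2) f, 3%nat)
            :: (iter_pd3 (repeat d 3) f, 4%nat) :: nil) (Defs.Dx :: Defs.Dy :: Defs.Dz :: nil)) ->
          Rabs (iter_pd3 (repeat d m) f x y z) <= Cst / norm3 x y z ^ S m)
        by (intros m Hm; apply (HB (_, S m)); auto; right; exact Hm).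
      repeat split; [apply (Hd 1%nat) | apply (Hd 2%nat) | apply (Hd 3%nat)];
        apply in_flat_map; exists d; (split; [destruct d; simpl; tauto | simpl; tauto]).
Qed.

Definition continuous3 (G : R -> R -> R -> R) : Prop :=
  forall x y z, continuous (fun p : R * R * R => G (fst (fst p)) (snd (fst p)) (snd p)) (x, y, z).

Lemma jcontinuous_comp3 (G : R -> R -> R -> R) (u v w : R -> R -> R) :
  continuous3 G -> jcontinuous u -> jcontinuous v -> jcontinuous w ->
  jcontinuous (fun a b => G (u a b) (v a b) (w a b)).
Proof.
  intros HG Hu Hv Hw a b.
  apply (continuous_comp (U := prod_UniformSpace R_UniformSpace R_UniformSpace)
    (V := prod_UniformSpace (prod_UniformSpace R_UniformSpace R_UniformSpace) R_UniformSpace)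
    (fun p : R * R => ((u (fst p) (snd p), v (fst p) (snd p)), w (fst p) (snd p)))
    (fun q : R * R * R => G (fst (fst q)) (snd (fst q)) (snd q))).
  - repeat apply continuous_pair; auto.
  - apply HG.
Qed.

Lemma slice_decay_comp (G0 G1 G2 G3 GB : R -> R -> R -> R) (u v w : R -> R -> R) (c Cst : R) :
  0 <= Cst -> continuous3 G0 -> continuous3 G1 -> continuous3 G2 -> continuous3 G3 ->
  continuous3 GB -> jcontinuous u -> jcontinuous v -> jcontinuous w ->
  (forall a b, u a b ^ 2 + v a b ^ 2 + w a b ^ 2 = a ^ 2 + b ^ 2 + c ^ 2) ->
  (forall a b, is_derive (fun a' => G0 (u a' b) (v a' b) (w a' b)) a (G1 (u a b) (v a b) (w a b))) ->
  (forall a b, is_derive (fun a' => G1 (u a' b) (v a' b) (w a' b)) a (G2 (u a b) (v a b) (w a b))) ->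
  (forall a b, is_derive (fun a' => G2 (u a' b) (v a' b) (w a' b)) a (G3 (u a b) (v a b) (w a b))) ->
  (forall a b, is_derive (fun b' => G0 (u a b') (v a b') (w a b')) b (GB (u a b) (v a b) (w a b))) ->
  (forall x y z, 1 < norm3 x y z ->
    Rabs (G0 x y z) <= Cst / norm3 x y z /\ Rabs (G1 x y z) <= Cst / norm3 x y z ^ 2 /\
    Rabs (G2 x y z) <= Cst / norm3 x y z ^ 3 /\ Rabs (G3 x y z) <= Cst / norm3 x y z ^ 4 /\
    Rabs (GB x y z) <= Cst / norm3 x y z ^ 2) ->
  slice_decay (fun a b => G0 (u a b) (v a b) (w a b)) (fun a b => G1 (u a b) (v a b) (w a b))
    (fun a b => G2 (u a b) (v a b) (w a b)) (fun a b => G3 (u a b) (v a b) (w a b))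
    (fun a b => GB (u a b) (v a b) (w a b)) c Cst.
Proof.
  intros HC C0 C1 C2 C3 CB Ju Jv Jw Hsq D1 D2 D3 DB HB.
  assert (Hn : forall a b, norm3 (u a b) (v a b) (w a b) = sqrt (a ^ 2 + b ^ 2 + c ^ 2))
    by (intros; unfold norm3; rewrite Hsq; reflexivity).
  constructor; auto; try (apply jcontinuous_comp3; auto); intros a b Hq;
    assert (Hq' : 1 < norm3 (u a b) (v a b) (w a b))
      by (rewrite Hn, <- sqrt_1; apply sqrt_lt_1_alt; lra);
    destruct (HB _ _ _ Hq') as (B0 & B1 & B2 & B3 & BB); rewrite Hn in *.
  - exact B0.
  - rewrite pow2_sqrt in B1 by nra; exact B1.
  - replace (sqrt (a ^ 2 + b ^ 2 + c ^ 2) ^ 3)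
      with (sqrt (a ^ 2 + b ^ 2 + c ^ 2) ^ 2 * sqrt (a ^ 2 + b ^ 2 + c ^ 2)) in B2 by ring.
    rewrite pow2_sqrt in B2 by nra; exact B2.
  - replace (sqrt (a ^ 2 + b ^ 2 + c ^ 2) ^ 4)
      with ((sqrt (a ^ 2 + b ^ 2 + c ^ 2) ^ 2) ^ 2) in B3 by ring.
    rewrite pow2_sqrt in B3 by nra; exact B3.
  - rewrite pow2_sqrt in BB by nra; exact BB.
Qed.

Section SmoothSlices.

Variables (f : R -> R -> R -> R) (Cst : R).
Hypothesis f_smooth : smooth3 f.
Hypothesis f_decay : decay_bounds3 f Cst.

Local Notation I0 := (iter_pd3 nil f).
Local Notation I1 d := (iter_pd3 (d :: nil) f).
Local Notation I2 d := (iter_pd3 (d :: d :: nil) f).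
Local Notation I3 d := (iter_pd3 (d :: d :: d :: nil) f).

Lemma is_derive_iter_pd3_x (l : list dir3) (x y z : R) :
  is_derive (fun t => iter_pd3 l f t y z) x (iter_pd3 (Defs.Dx :: l) f x y z).
Proof. apply Derive_correct, (f_smooth l x y z). Qed.

Lemma is_derive_iter_pd3_y (l : list dir3) (x y z : R) :
  is_derive (fun t => iter_pd3 l f x t z) y (iter_pd3 (Dy :: l) f x y z).
Proof. apply Derive_correct, (f_smooth l x y z). Qed.

Lemma is_derive_iter_pd3_z (l : list dir3) (x y z : R) :
  is_derive (fun t => iter_pd3 l f x y t) z (iter_pd3 (Dz :: l) f x y z).
Proof. apply Derive_correct, (f_smooth l x y z). Qed.

Lemma continuous3_iter_pd3 (l : list dir3) : continuous3 (iter_pd3 l f).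
Proof. intros x y z; apply (f_smooth l x y z). Qed.

Lemma jcontinuous_first : jcontinuous (fun a _ => a).
Proof. apply (jcontinuous_lift1 (fun a => a)); intros; apply continuous_id. Qed.

Lemma jcontinuous_second : jcontinuous (fun _ b => b).
Proof. apply (jcontinuous_lift2 (fun b => b)); intros; apply continuous_id. Qed.

Ltac coordinate_continuity :=
  match goal with
  | |- jcontinuous (fun a b => a) => apply jcontinuous_first
  | |- jcontinuous (fun a b => b) => apply jcontinuous_second
  | |- jcontinuous (fun a b => ?c) => apply jcontinuous_const
  end.

Ltac slice_derivative :=
  intros a b; cbv beta; match goal with
  | |- is_derive (fun t => iter_pd3 ?l f t _ _) _ _ => apply is_derive_iter_pd3_x
  | |- is_derive (fun t => iter_pd3 ?l f _ t _) _ _ => apply is_derive_iter_pd3_y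
  | |- is_derive (fun t => iter_pd3 ?l f _ _ t) _ _ => apply is_derive_iter_pd3_z
  end.

Ltac slice_instance :=
  [> apply f_decay
  | apply continuous3_iter_pd3 | apply continuous3_iter_pd3 | apply continuous3_iter_pd3
  | apply continuous3_iter_pd3 | apply continuous3_iter_pd3
  | coordinate_continuity | coordinate_continuity | coordinate_continuity
  | intros; ring
  | slice_derivative | slice_derivative | slice_derivative | slice_derivative
  | intros x y z Hn; destruct (proj2 f_decay x y z Hn) as [B0 Bd];
    destruct (Bd Defs.Dx) as (X1 & X2 & X3), (Bd Dy) as (Y1 & Y2 & Y3), (Bd Dz) as (Z1 & Z2 & Z3);
    repeat split; assumption ].

Lemma slice_decay_xy (c : R) : slice_decay (fun a b => I0 a b c) (fun a b => I1 Defs.Dx a b c)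
  (fun a b => I2 Defs.Dx a b c) (fun a b => I3 Defs.Dx a b c) (fun a b => I1 Dy a b c) c Cst.
Proof.
  apply (slice_decay_comp I0 (I1 Defs.Dx) (I2 Defs.Dx) (I3 Defs.Dx) (I1 Dy)
    (fun a b => a) (fun a b => b) (fun a b => c)); slice_instance.
Qed.

Lemma slice_decay_yx (c : R) : slice_decay (fun a b => I0 b a c) (fun a b => I1 Dy b a c)
  (fun a b => I2 Dy b a c) (fun a b => I3 Dy b a c) (fun a b => I1 Defs.Dx b a c) c Cst.
Proof.
  apply (slice_decay_comp I0 (I1 Dy) (I2 Dy) (I3 Dy) (I1 Defs.Dx)
    (fun a b => b) (fun a b => a) (fun a b => c)); slice_instance.
Qed.

Lemma slice_decay_xz (c : R) : slice_decay (fun a b => I0 a c b) (fun a b => I1 Defs.Dx a c b)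
  (fun a b => I2 Defs.Dx a c b) (fun a b => I3 Defs.Dx a c b) (fun a b => I1 Dz a c b) c Cst.
Proof.
  apply (slice_decay_comp I0 (I1 Defs.Dx) (I2 Defs.Dx) (I3 Defs.Dx) (I1 Dz)
    (fun a b => a) (fun a b => c) (fun a b => b)); slice_instance.
Qed.

Lemma slice_decay_zx (c : R) : slice_decay (fun a b => I0 b c a) (fun a b => I1 Dz b c a)
  (fun a b => I2 Dz b c a) (fun a b => I3 Dz b c a) (fun a b => I1 Defs.Dx b c a) c Cst.
Proof.
  apply (slice_decay_comp I0 (I1 Dz) (I2 Dz) (I3 Dz) (I1 Defs.Dx)
    (fun a b => b) (fun a b => c) (fun a b => a)); slice_instance.
Qed.

Lemma slice_decay_yz (c : R) : slice_decay (fun a b => I0 c a b) (fun a b => I1 Dy c a b)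
  (fun a b => I2 Dy c a b) (fun a b => I3 Dy c a b) (fun a b => I1 Dz c a b) c Cst.
Proof.
  apply (slice_decay_comp I0 (I1 Dy) (I2 Dy) (I3 Dy) (I1 Dz)
    (fun a b => c) (fun a b => a) (fun a b => b)); slice_instance.
Qed.

Lemma slice_decay_zy (c : R) : slice_decay (fun a b => I0 c b a) (fun a b => I1 Dz c b a)
  (fun a b => I2 Dz c b a) (fun a b => I3 Dz c b a) (fun a b => I1 Dy c b a) c Cst.
Proof.
  apply (slice_decay_comp I0 (I1 Dz) (I2 Dz) (I3 Dz) (I1 Dy)
    (fun a b => c) (fun a b => b) (fun a b => a)); slice_instance.
Qed.

Lemma pair_fourier_xy (k l : R) : k <> 0 -> l <> 0 -> forall c,
  pair_fourier (fun x y => f x y c) k l c (transform_const Cst k) (transform_const Cst l).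
Proof. intros; eapply pair_fourier_of_slices; [apply slice_decay_xy | apply slice_decay_yx | ..]; auto. Qed.

Lemma pair_fourier_xz (k l : R) : k <> 0 -> l <> 0 -> forall c,
  pair_fourier (fun x z => f x c z) k l c (transform_const Cst k) (transform_const Cst l).
Proof. intros; eapply pair_fourier_of_slices; [apply slice_decay_xz | apply slice_decay_zx | ..]; auto. Qed.

Lemma pair_fourier_yz (k l : R) : k <> 0 -> l <> 0 -> forall c,
  pair_fourier (fun y z => f c y z) k l c (transform_const Cst k) (transform_const Cst l).
Proof. intros; eapply pair_fourier_of_slices; [apply slice_decay_yz | apply slice_decay_zy | ..]; auto. Qed.

End SmoothSlices.

Lemma moderate_decrease2C_of_bound (h : R -> R -> C) (K : R) :
  (forall u v, 1 < u ^ 2 + v ^ 2 -> Cmod (h u v) <= K / sqrt (u ^ 2 + v ^ 2) ^ 3) ->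
  moderate_decrease2C 3 h.
Proof.
  intros H; exists K; intros u v Huv; unfold norm2 in *; apply H.
  destruct (Rlt_or_le 1 (u ^ 2 + v ^ 2)) as [| Hle]; auto.
  rewrite <- sqrt_1 in Huv; apply sqrt_lt_0_alt in Huv; lra.
Qed.

Lemma smooth_decay_of_quasi_normal3 (f : R -> R -> R -> R) :
  quasi_normal3 f \/ quasi_split_normal3 f ->
  smooth3 f /\ very_moderate_decrease3 f /\ cond_v3 f.
Proof. intros [(? & _ & _ & _ & ? & ? & _) | (? & _ & _ & _ & ? & ? & _)]; auto. Qed.

Theorem lemma17 (f : R -> R -> R -> R)
  (Hf : quasi_normal3 f \/ quasi_split_normal3 f)
  (k1 k2 k3 : R) (Hk1 : k1 <> 0) (Hk2 : k2 <> 0) (Hk3 : k3 <> 0) :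
  exists (A : R -> R -> C) (B : R -> R -> C) (Cf : R -> R -> C)
         (F : R -> C) (G : R -> C) (H : R -> C),
    (* (a) A y z = A(k1,y,z), B x z = B(x,k2,z), Cf x y = C(x,y,k3) *)
    (forall y z, ft_lim1 (fun x => f x y z) k1 (A y z)) /\
    (forall x z, ft_lim1 (fun y => f x y z) k2 (B x z)) /\
    (forall x y, ft_lim1 (fun z => f x y z) k3 (Cf x y)) /\
    moderate_decrease2C 3 A /\ moderate_decrease2C 3 B /\ moderate_decrease2C 3 Cf /\
    (* (b) F z = F(k1,k2,z), G y = G(k1,y,k3), H x = H(x,k2,k3) *)
    (forall z, ft_lim2 (fun x y => f x y z) k1 k2 (F z)) /\
    (forall y, ft_lim2 (fun x z => f x y z) k1 k3 (G y)) /\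
    (forall x, ft_lim2 (fun y z => f x y z) k2 k3 (H x)) /\
    moderate_decrease1 F /\ moderate_decrease1 G /\ moderate_decrease1 H /\
    (* (c) *)
    (forall z, ft_int (fun y => A y z) k2 (F z) /\ ft_int (fun x => B x z) k1 (F z)) /\
    (forall y, ft_int (fun z => A y z) k3 (G y) /\ ft_int (fun x => Cf x y) k1 (G y)) /\
    (forall x, ft_int (fun z => B x z) k3 (H x) /\ ft_int (fun y => Cf x y) k2 (H x)).

Proof.
  destruct (smooth_decay_of_quasi_normal3 f Hf) as (Hs & Hvm & Hv).
  destruct (ex_decay_bounds3 f Hvm Hv) as [Cst Hd].
  pose proof (pair_fourier_xy f Cst Hs Hd k1 k2 Hk1 Hk2) as XY.
  pose proof (pair_fourier_xz f Cst Hs Hd k1 k3 Hk1 Hk3) as XZ.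
  pose proof (pair_fourier_yz f Cst Hs Hd k2 k3 Hk2 Hk3) as YZ.
  exists (fun y z => ft1 (fun x => f x y z) k1), (fun x z => ft1 (fun y => f x y z) k2),
    (fun x y => ft1 (fun z => f x y z) k3), (fun z => ft2 (fun x y => f x y z) k1 k2),
    (fun y => ft2 (fun x z => f x y z) k1 k3), (fun x => ft2 (fun y z => f x y z) k2 k3).
  repeat split.
  - intros y z; apply (pf_lim_first (XY z)).
  - intros x z; apply (pf_lim_second (XY z)).
  - intros x y; apply (pf_lim_second (XZ y)).
  - eapply moderate_decrease2C_of_bound; intros y z; apply (pf_decay_first (XY z)).
  - eapply moderate_decrease2C_of_bound; intros x z; apply (pf_decay_second (XY z)).
  - eapply moderate_decrease2C_of_bound; intros x y; apply (pf_decay_second (XZ y)).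
  - intros z; apply (pf_lim_double (XY z)).
  - intros y; apply (pf_lim_double (XZ y)).
  - intros x; apply (pf_lim_double (YZ x)).
  - exists (transform_const Cst k1 * PI); intros z; apply (pf_decay_double (XY z)).
  - exists (transform_const Cst k1 * PI); intros y; apply (pf_decay_double (XZ y)).
  - exists (transform_const Cst k2 * PI); intros x; apply (pf_decay_double (YZ x)).
  - apply (pf_int_first (XY z)).
  - apply (pf_int_second (XY z)).
  - apply (pf_int_first (XZ y)).
  - apply (pf_int_second (XZ y)).
  - apply (pf_int_first (YZ x)).
  - apply (pf_int_second (YZ x)).
Qed.
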